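(* Let $\epsilon>0$, $\mathbf C\in\mathbb R^{n\times n}$, $\mathbf b_1,\dots,\mathbf b_N\in\Sigma_n$, weights $\lambda\in\Sigma_N$ with $\lambda_k>0$ for all $k$, $A:\mathbb R^n\to\mathbb R^p$ linear with adjoint $A^*$, and $J:\mathbb R^p\to\mathbb R$ convex (finite-valued) with convex conjugate $J^*$. Consider the primal problem $$(\mathcal P)\qquad \min_{\mathbf a\in\Sigma_n}\sum_{k=1}^N\lambda_kF_{\mathbf b_k}(\mathbf a)+J(A\mathbf a)$$ and the dual problem $$(\mathcal D)\qquad \inf_{\mathbf f_1,\dots,\mathbf f_N\in\mathbb R^n,\ \mathbf g\in\mathbb R^p}\sum_{k=1}^N\lambda_kF^*_{\mathbf b_k}(\mathbf f_k)+J^*(\mathbf g)\quad\text{s.t.}\quad A^*\mathbf g+\sum_{k=1}^N\lambda_k\mathbf f_k=0.$$ Then $\min(\mathcal P)=-\inf(\mathcal D)$, and if $((\mathbf f_k)_{k=1}^N,\mathbf g)$ is a minimizer of $(\mathcal D)$, then the vectors $\nabla F^*_{\mathbf b_k}(\mathbf f_k)$, $k=1,\dots,N$, are all equal to a common vector $\mathbf a$, and this $\mathbf a$ is a solution of $(\mathcal P)$.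
   Context: $\Sigma_n=\{\mathbf a\in\mathbb R^n_+:\sum_i\mathbf a_i=1\}$; $U(\mathbf a,\mathbf b)=\{\mathbf P\in\mathbb R_+^{n\times n}:\mathbf P\mathbf 1_n=\mathbf a,\ \mathbf P^\top\mathbf 1_n=\mathbf b\}$; $\mathbf H(\mathbf P)=-\sum_{i,j}\mathbf P_{i,j}(\log\mathbf P_{i,j}-1)$ with $0\log0=0$; $W^\epsilon_{\mathbf C}(\mathbf a,\mathbf b)=\min_{\mathbf P\in U(\mathbf a,\mathbf b)}\sum_{i,j}\mathbf P_{i,j}\mathbf C_{i,j}-\epsilon\mathbf H(\mathbf P)$. For $\mathbf b\in\Sigma_n$, $F_{\mathbf b}(\mathbf a)=W^\epsilon_{\mathbf C}(\mathbf a,\mathbf b)$ for $\mathbf a\in\Sigma_n$, and $F^*_{\mathbf b}(\mathbf f)=\max_{\mathbf a\in\Sigma_n}\langle\mathbf f,\mathbf a\rangle-F_{\mathbf b}(\mathbf a)$ for $\mathbf f\in\mathbb R^n$ (a differentiable function on $\mathbb R^n$). $J^*(\mathbf g)=\sup_{\mathbf y\in\mathbb R^p}\langle\mathbf g,\mathbf y\rangle-J(\mathbf y)$. *)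

From Stdlib Require Import Reals ClassicalEpsilon.
From mathcomp Require Import all_boot.

Set Implicit Arguments.
Unset Strict Implicit.
Unset Printing Implicit Defensive.

Local Open Scope R_scope.

Inductive ERbar : Type := Fin (r : R) | PInf | MInf.

Definition ER_opp (x : ERbar) : ERbar :=
  match x with Fin r => Fin (- r) | PInf => MInf | MInf => PInf end.

Definition ER_le (x y : ERbar) : Prop :=
  match x, y with
  | MInf, _ => True
  | _, PInf => True
  | Fin a, Fin b => a <= b
  | _, _ => False
  end.

Definition ER_plusR (r : R) (x : ERbar) : ERbar :=
  match x with Fin s => Fin (r + s) | PInf => PInf | MInf => MInf end.

Definition ER_sup (E : R -> Prop) : ERbar :=
  match excluded_middle_informative (exists x, E x) with
  | right _ => MInf
  | left ne =>
      match excluded_middle_informative (bound E) with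
      | right _ => PInf
      | left hb => Fin (proj1_sig (completeness E hb ne))
      end
  end.

Definition ER_inf (E : R -> Prop) : ERbar :=
  ER_opp (ER_sup (fun x => E (- x))).

Definition ER_real (x : ERbar) : R := match x with Fin r => r | _ => 0 end.

Definition vec (n : nat) := 'I_n -> R.

Definition vsum (n : nat) (f : 'I_n -> R) : R := \big[Rplus/0]_(i < n) f i.

Definition dot (n : nat) (x y : vec n) : R := vsum (fun i => x i * y i).

Definition vadd (n : nat) (x y : vec n) : vec n := fun i => x i + y i.

Definition vnorm (n : nat) (x : vec n) : R := sqrt (dot x x).

Definition simplex (n : nat) (a : vec n) : Prop :=
  (forall i, 0 <= a i) /\ vsum a = 1.

Definition coupling (n : nat) (a b : vec n) (P : 'I_n -> 'I_n -> R) : Prop :=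
  (forall i j, 0 <= P i j) /\
  (forall i, vsum (fun j => P i j) = a i) /\
  (forall j, vsum (fun i => P i j) = b j).

(* x log x with the convention 0 log 0 = 0 (only used for x >= 0) *)
Definition xlnx (x : R) : R := if Rle_dec x 0 then 0 else x * ln x.

Definition entropy (n : nat) (P : 'I_n -> 'I_n -> R) : R :=
  - vsum (fun i => vsum (fun j => xlnx (P i j) - P i j)).

Definition ot_cost (n : nat) (eps : R) (C P : 'I_n -> 'I_n -> R) : R :=
  vsum (fun i => vsum (fun j => P i j * C i j)) - eps * entropy P.

Definition Weps (n : nat) (eps : R) (C : 'I_n -> 'I_n -> R) (a b : vec n) : R :=
  ER_real (ER_inf (fun w => exists P, coupling a b P /\ w = ot_cost eps C P)).

Definition Fb (n : nat) (eps : R) (C : 'I_n -> 'I_n -> R) (b : vec n) (a : vec n) : R :=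
  Weps eps C a b.

Definition Fb_star (n : nat) (eps : R) (C : 'I_n -> 'I_n -> R) (b : vec n) (f : vec n) : R :=
  ER_real (ER_sup (fun v => exists a, simplex a /\ v = dot f a - Fb eps C b a)).

Definition conj_star (p : nat) (J : vec p -> R) (g : vec p) : ERbar :=
  ER_sup (fun v => exists y, v = dot g y - J y).

Definition is_gradient (n : nat) (F : vec n -> R) (x v : vec n) : Prop :=
  forall e, 0 < e -> exists d, 0 < d /\
    forall h : vec n, vnorm h < d ->
      Rabs (F (vadd x h) - F x - dot v h) <= e * vnorm h.

Definition convex_fun (p : nat) (J : vec p -> R) : Prop :=
  forall (x y : vec p) (t : R), 0 <= t <= 1 ->
    J (fun i => t * x i + (1 - t) * y i) <= t * J x + (1 - t) * J y.

Definition linear_map (n p : nat) (A : vec n -> vec p) : Prop :=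
  (forall x y, A (vadd x y) = vadd (A x) (A y)) /\
  (forall (c : R) x, A (fun i => c * x i) = (fun j => c * A x j)).

Definition is_adjoint (n p : nat) (A : vec n -> vec p) (Astar : vec p -> vec n) : Prop :=
  forall x y, dot (A x) y = dot x (Astar y).

Definition primal_obj (n N p : nat) (eps : R) (C : 'I_n -> 'I_n -> R)
  (b : 'I_N -> vec n) (lam : vec N) (A : vec n -> vec p) (J : vec p -> R)
  (a : vec n) : R :=
  vsum (fun k => lam k * Fb eps C (b k) a) + J (A a).

Definition dual_feasible (n N p : nat) (lam : vec N) (Astar : vec p -> vec n)
  (f : 'I_N -> vec n) (g : vec p) : Prop :=
  forall i, Astar g i + vsum (fun k => lam k * f k i) = 0.

Definition dual_obj (n N p : nat) (eps : R) (C : 'I_n -> 'I_n -> R)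
  (b : 'I_N -> vec n) (lam : vec N) (J : vec p -> R)
  (f : 'I_N -> vec n) (g : vec p) : ERbar :=
  ER_plusR (vsum (fun k => lam k * Fb_star eps C (b k) (f k))) (conj_star J g).

(* inf(D): infimum of the dual objective over the feasible set
   (points where J*(g) = +oo do not lower the infimum) *)
Definition dual_inf (n N p : nat) (eps : R) (C : 'I_n -> 'I_n -> R)
  (b : 'I_N -> vec n) (lam : vec N) (Astar : vec p -> vec n) (J : vec p -> R) : ERbar :=
  ER_inf (fun v => exists f g, dual_feasible lam Astar f g /\
                               dual_obj eps C b lam J f g = Fin v).

Definition dual_minimizer (n N p : nat) (eps : R) (C : 'I_n -> 'I_n -> R)
  (b : 'I_N -> vec n) (lam : vec N) (Astar : vec p -> vec n) (J : vec p -> R)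
  (f : 'I_N -> vec n) (g : vec p) : Prop :=
  dual_feasible lam Astar f g /\
  forall f' g', dual_feasible lam Astar f' g' ->
    ER_le (dual_obj eps C b lam J f g) (dual_obj eps C b lam J f' g').

From Stdlib Require Import Reals Lra Classical ClassicalEpsilon FunctionalExtensionality.
From HB Require Import structures.
From mathcomp Require Import all_boot.

(* The value function [w x] of the dual problem, with its constraint perturbed to
   [A^* g + sum_k lam_k f_k = x], is finite and convex on R^n, so by
   finite-dimensional Hahn-Banach it has a subgradient [a0] at [0].  Moving a single
   [f_k] shows that [a0] is an approximate subgradient of [F*_{b_k}]; as [F*] is
   monotone and commutes with adding constants, this forces [a0] into the simplex.
   Since [F_b] is convex and lower semicontinuous on the simplex it is its own
   biconjugate, and so is [J]; feeding near-optimal conjugate pairs for all primal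
   terms at [a0] into the subgradient inequality gives [P a0 <= - w 0], and weak
   duality gives [- w 0 <= P a] for every [a].  For a dual minimizer [a0] is even an
   exact subgradient of [F*_{b_k}] at [f_k]; having an explicit log-sum-exp form,
   [F*_b] is differentiable, so its only subgradient is its gradient. *)

Set Implicit Arguments.
Unset Strict Implicit.
Unset Printing Implicit Defensive.

Local Open Scope R_scope.

HB.instance Definition _ :=
  Monoid.isComLaw.Build R 0 Rplus (fun a b c => esym (Rplus_assoc a b c)) Rplus_comm Rplus_0_l.

(** * Finite sums and vectors *)

Section FiniteSums.
Variable n : nat.
Implicit Types f g : 'I_n -> R.

Lemma eq_vsum f g : (forall i, f i = g i) -> vsum f = vsum g.
Proof. by move=> fg; apply: eq_bigr => i _. Qed.

Lemma vsumD f g : vsum (fun i => f i + g i) = vsum f + vsum g.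
Proof. exact: big_split. Qed.

Lemma vsumMl (c : R) f : vsum (fun i => c * f i) = c * vsum f.
Proof.
rewrite /vsum; elim/big_rec2: _ => [|i y1 y2 _ ->]; first by rewrite Rmult_0_r.
by rewrite Rmult_plus_distr_l.
Qed.

Lemma vsumMr (c : R) f : vsum (fun i => f i * c) = vsum f * c.
Proof. by rewrite Rmult_comm -vsumMl; apply: eq_vsum => i; ring. Qed.

Lemma vsumN f : vsum (fun i => - f i) = - vsum f.
Proof.
have -> : - vsum f = -1 * vsum f by ring.
by rewrite -vsumMl; apply: eq_vsum => i; ring.
Qed.

Lemma vsumB f g : vsum (fun i => f i - g i) = vsum f - vsum g.
Proof. by rewrite /Rminus -vsumN -vsumD. Qed.

Lemma ler_vsum f g : (forall i, f i <= g i) -> vsum f <= vsum g.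
Proof.
move=> fg; rewrite /vsum; elim/big_rec2: _ => [|i y1 y2 _ Hy]; first lra.
exact: Rplus_le_compat.
Qed.

Lemma vsum0 : vsum (fun _ : 'I_n => 0) = 0.
Proof. by rewrite /vsum big1. Qed.

Lemma vsum_const c : vsum (fun _ : 'I_n => c) = INR n * c.
Proof.
rewrite /vsum big_const_ord; elim: n => [|m IH] /=; first ring.
by rewrite IH; case: m {IH} => /= [|m]; ring.
Qed.

Lemma vsum_ge0 f : (forall i, 0 <= f i) -> 0 <= vsum f.
Proof. by move=> f_ge0; rewrite -vsum0; apply: ler_vsum. Qed.

Lemma vsum_delta f (k : 'I_n) : (forall i, i != k -> f i = 0) -> vsum f = f k.
Proof. by move=> fk; rewrite /vsum (bigD1 k) //= big1 ?Rplus_0_r. Qed.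

Lemma vsum_update f (k : 'I_n) c :
  vsum (fun i => if i == k then c else f i) = vsum f + (c - f k).
Proof.
rewrite (eq_vsum (g := fun i => f i + (if i == k then c - f k else 0))); last first.
  by move=> i; case: eqP => [->|_]; ring.
by rewrite vsumD (@vsum_delta (fun i => if i == k then c - f k else 0) k) ?eqxx // => i /negbTE ->.
Qed.

Lemma vsum_term_le f (k : 'I_n) : (forall i, 0 <= f i) -> f k <= vsum f.
Proof.
move=> f_ge0; rewrite /vsum (bigD1 k) //= -[X in X <= _]Rplus_0_r.
apply: Rplus_le_compat_l; elim/big_rec: _ => [|i x _ Hx]; first lra.
by have := f_ge0 i; lra.
Qed.

Lemma vsum_eq0_ge0 f : (forall i, 0 <= f i) -> vsum f = 0 -> forall i, f i = 0.
Proof. by move=> f_ge0 f0 i; have := vsum_term_le i f_ge0; have := f_ge0 i; lra. Qed.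

Lemma vsum_gt0_exists f : (forall i, 0 <= f i) -> 0 < vsum f -> exists i, 0 < f i.
Proof.
move=> f_ge0 f_gt0; apply: NNPP => no_pos.
suff : vsum f <= 0 by lra.
rewrite -vsum0; apply: ler_vsum => i; apply: Rnot_lt_le => fi; apply: no_pos; by exists i.
Qed.

End FiniteSums.

Lemma vsum_exchange n m (f : 'I_n -> 'I_m -> R) :
  vsum (fun i => vsum (f i)) = vsum (fun j => vsum (fun i => f i j)).
Proof. exact: exchange_big. Qed.

Definition vsub n (x y : vec n) : vec n := fun i => x i - y i.
Definition vscal n (c : R) (x : vec n) : vec n := fun i => c * x i.
Definition vzero n : vec n := fun _ => 0.
Definition basis_vec n (k : 'I_n) : vec n := fun i => if i == k then 1 else 0.

Section Dot.
Variable n : nat.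
Implicit Types x y z : vec n.

Lemma dotC x y : dot x y = dot y x.
Proof. by apply: eq_vsum => i; ring. Qed.

Lemma dotDl x y z : dot (vadd x y) z = dot x z + dot y z.
Proof. by rewrite /dot -vsumD; apply: eq_vsum => i; rewrite /vadd; ring. Qed.

Lemma dotDr x y z : dot z (vadd x y) = dot z x + dot z y.
Proof. by rewrite /dot -vsumD; apply: eq_vsum => i; rewrite /vadd; ring. Qed.

Lemma dotBl x y z : dot (vsub x y) z = dot x z - dot y z.
Proof. by rewrite /dot -vsumB; apply: eq_vsum => i; rewrite /vsub; ring. Qed.

Lemma dotBr x y z : dot z (vsub x y) = dot z x - dot z y.
Proof. by rewrite /dot -vsumB; apply: eq_vsum => i; rewrite /vsub; ring. Qed.

Lemma dotZl c x y : dot (vscal c x) y = c * dot x y.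
Proof. by rewrite /dot -vsumMl; apply: eq_vsum => i; rewrite /vscal; ring. Qed.

Lemma dotZr c x y : dot x (vscal c y) = c * dot x y.
Proof. by rewrite /dot -vsumMl; apply: eq_vsum => i; rewrite /vscal; ring. Qed.

Lemma dot0l x : dot (@vzero n) x = 0.
Proof. by rewrite /dot -(@vsum0 n); apply: eq_vsum => i; rewrite /vzero; ring. Qed.

Lemma dot_basis_vec (k : 'I_n) x : dot x (basis_vec k) = x k.
Proof.
by rewrite /dot (vsum_delta (k := k)) /basis_vec ?eqxx ?Rmult_1_r // => i /negbTE ->; ring.
Qed.

Lemma dot_constr x c : dot x (fun _ => c) = c * vsum x.
Proof. by rewrite /dot -vsumMl; apply: eq_vsum => i; ring. Qed.

Lemma eq_dot x x' y y' : (forall i, x i = x' i) -> (forall i, y i = y' i) ->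
  dot x y = dot x' y'.
Proof. by move=> xx' yy'; apply: eq_vsum => i; rewrite xx' yy'. Qed.

Lemma dot_self_ge0 x : 0 <= dot x x.
Proof. by apply: vsum_ge0 => i; apply: Rle_0_sqr. Qed.

Lemma dot_self_eq0 x : dot x x = 0 -> forall i, x i = 0.
Proof.
move=> x0 i; have := vsum_eq0_ge0 (fun i => Rle_0_sqr (x i)) x0 i.
by rewrite /Rsqr => /Rmult_integral [].
Qed.

Lemma dot_combl t x y z :
  dot (fun i => t * x i + (1 - t) * y i) z = t * dot x z + (1 - t) * dot y z.
Proof. by rewrite /dot -!vsumMl -vsumD; apply: eq_vsum => i; ring. Qed.

Lemma dot_combr t x y z :
  dot z (fun i => t * x i + (1 - t) * y i) = t * dot z x + (1 - t) * dot z y.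
Proof. by rewrite dotC dot_combl !(dotC z). Qed.

Lemma vec_dot_inj x y : (forall z, dot x z = dot y z) -> x = y.
Proof. by move=> xy; apply: functional_extensionality => i; rewrite -!(dot_basis_vec i) xy. Qed.

End Dot.

Lemma vsum_dot_weighted n N (lam : vec N) (f : 'I_N -> vec n) (a : vec n) :
  vsum (fun k => lam k * dot (f k) a) = dot (fun i => vsum (fun k => lam k * f k i)) a.
Proof.
rewrite /dot (eq_vsum (g := fun k => vsum (fun i => lam k * f k i * a i))); last first.
  by move=> k; rewrite -vsumMl; apply: eq_vsum => i; ring.
by rewrite vsum_exchange; apply: eq_vsum => i; rewrite vsumMr.
Qed.

Lemma vnormZ n t (x : vec n) : 0 <= t -> vnorm (vscal t x) = t * vnorm x.
Proof.
move=> t_ge0; rewrite /vnorm dotZl dotZr -Rmult_assoc sqrt_mult; last exact: dot_self_ge0.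
- by rewrite sqrt_square.
- exact: Rmult_le_pos.
Qed.

Lemma simplex_le1 n (a : vec n) i : simplex a -> 0 <= a i <= 1.
Proof. by move=> [a_ge0 a1]; split => //; rewrite -a1; apply: vsum_term_le. Qed.

Lemma simplex_comb n (a a' : vec n) t : simplex a -> simplex a' -> 0 <= t <= 1 ->
  simplex (fun i => t * a i + (1 - t) * a' i).
Proof.
move=> [a_ge0 a1] [a'_ge0 a'1] t01; split.
- by move=> i; have := a_ge0 i; have := a'_ge0 i; nra.
- by rewrite vsumD !vsumMl a1 a'1; ring.
Qed.

Lemma dot_simplex_le n (f a : vec n) : simplex a -> dot f a <= vsum (fun i => Rabs (f i)).
Proof.
move=> a_simplex; apply: ler_vsum => i; have [a_ge0 a_le1] := simplex_le1 i a_simplex.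
by case: (Rcase_abs (f i)) => fi; [rewrite Rabs_left | rewrite Rabs_right]; nra.
Qed.

Definition dist1 n (x y : vec n) := vsum (fun i => Rabs (x i - y i)).

Lemma dist1_ge0 n (x y : vec n) : 0 <= dist1 x y.
Proof. by apply: vsum_ge0 => i; apply: Rabs_pos. Qed.

Lemma dist1_term_le n (x y : vec n) i : Rabs (x i - y i) <= dist1 x y.
Proof. exact: (vsum_term_le i (fun i => Rabs_pos _)). Qed.

Lemma dist1C n (x y : vec n) : dist1 x y = dist1 y x.
Proof. by apply: eq_vsum => i; apply: Rabs_minus_sym. Qed.

Lemma dist1_comb n (x y a a' : vec n) t : 0 <= t <= 1 ->
  dist1 (fun i => t * x i + (1 - t) * y i) (fun i => t * a i + (1 - t) * a' i)
  <= t * dist1 x a + (1 - t) * dist1 y a'.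
Proof.
move=> t01; rewrite /dist1 -!vsumMl -vsumD; apply: ler_vsum => i.
rewrite (_ : _ - _ = t * (x i - a i) + (1 - t) * (y i - a' i)); last by ring.
apply: Rle_trans (Rabs_triang _ _) _.
by rewrite !Rabs_mult (Rabs_right t) ?(Rabs_right (1 - t)); lra.
Qed.

(** * Suprema and infima in the extended reals *)

Section ExtendedSupInf.
Implicit Types E : R -> Prop.

Lemma ER_sup_real E : (exists x, E x) -> (exists M, forall x, E x -> x <= M) ->
  ER_sup E = Fin (ER_real (ER_sup E)).
Proof.
move=> ne [M HM]; rewrite /ER_sup; case: excluded_middle_informative => [ne'|//].
by case: excluded_middle_informative => [//|[]]; exists M.
Qed.

Lemma ER_sup_neq_MInf E : (exists x, E x) -> ER_sup E <> MInf.
Proof.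
move=> ne; rewrite /ER_sup; case: excluded_middle_informative => [ne'|//].
by case: excluded_middle_informative.
Qed.

Lemma ER_sup_ub E s : ER_sup E = Fin s -> forall x, E x -> x <= s.
Proof.
rewrite /ER_sup; case: excluded_middle_informative => [ne|//].
case: excluded_middle_informative => [hb|//].
by case: (completeness E hb ne) => s' [ub _] /= [<-].
Qed.

Lemma ER_sup_lub E s : ER_sup E = Fin s -> forall M, (forall x, E x -> x <= M) -> s <= M.
Proof.
rewrite /ER_sup; case: excluded_middle_informative => [ne|//].
case: excluded_middle_informative => [hb|//].
by case: (completeness E hb ne) => s' [_ lub] /= [<-].
Qed.

Lemma ER_sup_approx E s : ER_sup E = Fin s -> forall e, 0 < e -> exists x, E x /\ s - e < x.
Proof.
move=> Es e e_gt0; apply: NNPP => no_x.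
suff : s <= s - e by lra.
apply: (ER_sup_lub Es) => x Ex; apply: Rnot_lt_le => lt_x; apply: no_x; by exists x.
Qed.

Lemma ER_sup_max E s : E s -> (forall x, E x -> x <= s) -> ER_sup E = Fin s.
Proof.
move=> Es s_ub; have Ef := ER_sup_real (ex_intro _ s Es) (ex_intro _ s s_ub).
rewrite Ef; have := ER_sup_ub Ef Es; have := ER_sup_lub Ef s_ub.
by move=> *; f_equal; lra.
Qed.

Lemma ER_inf_real E : (exists x, E x) -> (exists m, forall x, E x -> m <= x) ->
  ER_inf E = Fin (ER_real (ER_inf E)).
Proof.
move=> [x Ex] [m Hm]; rewrite /ER_inf ER_sup_real //.
- by exists (- x); rewrite Ropp_involutive.
- by exists (- m) => y /Hm; lra.
Qed.

Lemma ER_inf_lb E s : ER_inf E = Fin s -> forall x, E x -> s <= x.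
Proof.
rewrite /ER_inf; case Es: (ER_sup _) => [s'| |] //= [<-] x Ex.
have : E (- - x) by rewrite Ropp_involutive.
by move/(ER_sup_ub Es); lra.
Qed.

Lemma ER_inf_approx E s : ER_inf E = Fin s -> forall e, 0 < e -> exists x, E x /\ x < s + e.
Proof.
rewrite /ER_inf; case Es: (ER_sup _) => [s'| |] //= [<-] e e_gt0.
by case: (ER_sup_approx Es e_gt0) => x [Ex lt_x]; exists (- x); split => //; lra.
Qed.

Lemma ER_inf_glb E s : ER_inf E = Fin s -> forall m, (forall x, E x -> m <= x) -> m <= s.
Proof.
move=> Es m m_lb; apply: Rnot_lt_le => lt_s.
case: (ER_inf_approx Es (e := m - s)) => [|x [Ex lt_x]]; first lra.
by have := m_lb x Ex; lra.
Qed.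

Lemma ER_inf_comb E1 E2 s1 s2 t X :
  ER_inf E1 = Fin s1 -> ER_inf E2 = Fin s2 -> 0 <= t <= 1 ->
  (forall u v, E1 u -> E2 v -> X <= t * u + (1 - t) * v) -> X <= t * s1 + (1 - t) * s2.
Proof.
move=> E1s E2s t01 HX; apply: Rnot_lt_le => lt_X.
set e := (X - (t * s1 + (1 - t) * s2)) / 2.
case: (ER_inf_approx E1s (e := e)) => [|u [E1u ltu]]; first by rewrite /e; lra.
case: (ER_inf_approx E2s (e := e)) => [|v [E2v ltv]]; first by rewrite /e; lra.
have := HX u v E1u E2v.
have : t * u + (1 - t) * v <= t * (s1 + e) + (1 - t) * (s2 + e).
  by apply: Rplus_le_compat; apply: Rmult_le_compat_l; lra.
by rewrite /e; lra.
Qed.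

Lemma ER_plusR_Fin s x v : ER_plusR s x = Fin v -> exists j, x = Fin j /\ v = s + j.
Proof. by case: x => //= j [<-]; exists j. Qed.

End ExtendedSupInf.

(** * Subgradients and conjugates *)

Section HahnBanach.
Variable m : nat.
Variable q : vec m -> R.
Hypothesis q_subadd : forall x y, q (vadd x y) <= q x + q y.
Hypothesis q_hom : forall c x, 0 < c -> q (vscal c x) = c * q x.

Lemma sublinear0 : q (@vzero m) = 0.
Proof.
have := q_hom (@vzero m) (ltac:(lra) : 0 < 2).
have -> : vscal 2 (@vzero m) = @vzero m.
  by apply: functional_extensionality => i; rewrite /vscal /vzero; ring.
lra.
Qed.

Lemma sublinear_scale_le (c : vec m) r y w a : 0 < r ->
  dot c (vscal (/ r) y) + a <= q (vadd (vscal (/ r) y) w) ->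
  dot c y + r * a <= q (vadd y (vscal r w)).
Proof.
move=> r_gt0; rewrite dotZr.
have -> : vadd y (vscal r w) = vscal r (vadd (vscal (/ r) y) w).
  by apply: functional_extensionality => i; rewrite /vadd /vscal; field; lra.
rewrite q_hom // => le_a.
have := Rmult_le_compat_l r _ _ (Rlt_le _ _ r_gt0) le_a.
have -> : r * (/ r * dot c y + a) = dot c y + r * a by field; lra.
done.
Qed.

Definition supported_below (k : nat) (x : vec m) := forall i : 'I_m, (k <= i)%N -> x i = 0.

Lemma supported_belowZ k c x : supported_below k x -> supported_below k (vscal c x).
Proof. by move=> xk i ki; rewrite /vscal xk //; ring. Qed.

Lemma hahn_banach_gap k (c e : vec m) :
  (forall x, supported_below k x -> dot c x <= q x) -> exists s,
  (forall y, supported_below k y -> dot c y - q (vadd y (vscal (-1) e)) <= s) /\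
  (forall z, supported_below k z -> s <= q (vadd z e) - dot c z).
Proof.
move=> c_le.
set S := fun v => exists y, supported_below k y /\ v = dot c y - q (vadd y (vscal (-1) e)).
have S_le y z : supported_below k y -> supported_below k z ->
    dot c y - q (vadd y (vscal (-1) e)) <= q (vadd z e) - dot c z.
  move=> yk zk; have yzk : supported_below k (vadd y z).
    by move=> i ki; rewrite /vadd yk ?zk //; ring.
  have := c_le _ yzk; rewrite dotDr.
  have -> : vadd y z = vadd (vadd y (vscal (-1) e)) (vadd z e).
    by apply: functional_extensionality => i; rewrite /vadd /vscal; ring.
  by have := q_subadd (vadd y (vscal (-1) e)) (vadd z e); lra.
have zk : supported_below k (@vzero m) by [].
have Ss : ER_sup S = Fin (ER_real (ER_sup S)).
  apply: ER_sup_real.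
    by exists (dot c (@vzero m) - q (vadd (@vzero m) (vscal (-1) e))), (@vzero m).
  by exists (q (vadd (@vzero m) e) - dot c (@vzero m)) => v [y [yk ->]]; apply: S_le.
exists (ER_real (ER_sup S)); split.
- by move=> y yk; apply: (ER_sup_ub Ss); exists y.
- by move=> z zk'; apply: (ER_sup_lub Ss) => v [y [yk ->]]; apply: S_le.
Qed.

Lemma hahn_banach_step k (km : (k < m)%N) (c : vec m) :
  (forall x, supported_below k x -> dot c x <= q x) ->
  exists c' : vec m, forall x, supported_below k.+1 x -> dot c' x <= q x.
Proof.
move=> c_le; set e := basis_vec (Ordinal km).
case: (hahn_banach_gap e c_le) => s [s_ge s_le].
exists (fun i => if i == Ordinal km then s else c i) => x xk1.
set t := x (Ordinal km); set y := fun i => if i == Ordinal km then 0 else x i.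
have yk : supported_below k y.
  move=> i ki; rewrite /y; case: eqP => // /eqP ne; apply: xk1.
  rewrite ltn_neqAle ki andbT; apply: contra ne => /eqP eq_ki.
  by apply/eqP/val_inj.
have -> : x = vadd y (vscal t e).
  apply: functional_extensionality => i; rewrite /vadd /vscal /y /e /basis_vec /t.
  by case: eqP => [->|_]; ring.
have -> : dot (fun i => if i == Ordinal km then s else c i) (vadd y (vscal t e)) = dot c y + t * s.
  rewrite dotDr dotZr dot_basis_vec eqxx; congr (_ + _).
  by apply: eq_vsum => i; rewrite /y; case: eqP => _; ring.
case: (Rtotal_order t 0) => [t_lt0|[->|t_gt0]].
- have -> : vscal t e = vscal (- t) (vscal (-1) e).
    by apply: functional_extensionality => i; rewrite /vscal; ring.
  have -> : t * s = - t * - s by ring.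
  apply: sublinear_scale_le; first lra.
  by have := s_ge _ (supported_belowZ (/ - t) yk); lra.
- have -> : vadd y (vscal 0 e) = y.
    by apply: functional_extensionality => i; rewrite /vadd /vscal; ring.
  by rewrite Rmult_0_l Rplus_0_r; apply: c_le.
- apply: sublinear_scale_le => //.
  by have := s_le _ (supported_belowZ (/ t) yk); lra.
Qed.

Theorem hahn_banach : exists c : vec m, forall x, dot c x <= q x.
Proof.
have ext : forall k, (k <= m)%N ->
    exists c : vec m, forall x, supported_below k x -> dot c x <= q x.
  elim=> [_|k IH km].
  - exists (@vzero m) => x x0.
    have -> : x = @vzero m by apply: functional_extensionality => i; apply: x0.
    by rewrite dot0l sublinear0; lra.
  - by case: (IH (ltnW km)) => c; apply: hahn_banach_step.
case: (ext m (leqnn m)) => c c_le; exists c => x.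
by apply: c_le => i; rewrite leqNgt ltn_ord.
Qed.

End HahnBanach.

Section ConvexSubgradient.
Variable m : nat.
Variable J : vec m -> R.
Hypothesis J_convex : convex_fun J.
Variable x : vec m.

Lemma convex_funP z u v t : 0 <= t <= 1 -> (forall i, z i = t * u i + (1 - t) * v i) ->
  J z <= t * J u + (1 - t) * J v.
Proof.
by move=> t01 zE; rewrite (functional_extensionality _ _ zE); apply: J_convex.
Qed.

Definition dir_point (h : vec m) (t : R) : vec m := fun i => x i + t * h i.
Definition diff_quot (h : vec m) (t : R) := (J (dir_point h t) - J x) / t.

Lemma diff_quot_lb h t : 0 < t -> J x - J (dir_point h (-1)) <= diff_quot h t.
Proof.
move=> t_gt0; rewrite /diff_quot.
have le_x : J x <= / (1 + t) * J (dir_point h t) + (1 - / (1 + t)) * J (dir_point h (-1)).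
  apply: convex_funP => [|i]; last by rewrite /dir_point; field; lra.
  split; first by apply/Rlt_le/Rinv_0_lt_compat; lra.
  by rewrite -Rinv_1; apply: Rinv_le_contravar; lra.
have : (1 + t) * J x <= J (dir_point h t) + t * J (dir_point h (-1)).
  have := Rmult_le_compat_l (1 + t) _ _ ltac:(lra) le_x.
  have -> : (1 + t) * (/ (1 + t) * J (dir_point h t) + (1 - / (1 + t)) * J (dir_point h (-1)))
          = J (dir_point h t) + t * J (dir_point h (-1)) by field; lra.
  done.
move=> le_1t; apply: (Rmult_le_reg_l t) => //.
have -> : t * ((J (dir_point h t) - J x) / t) = J (dir_point h t) - J x by field; lra.
lra.
Qed.

Lemma diff_quot_mono h s t : 0 < s -> s <= t -> diff_quot h s <= diff_quot h t.
Proof.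
move=> s_gt0 st; rewrite /diff_quot.
have le_s : J (dir_point h s) <= s / t * J (dir_point h t) + (1 - s / t) * J x.
  apply: convex_funP => [|i]; last by rewrite /dir_point; field; lra.
  split; first by apply/Rlt_le/Rdiv_lt_0_compat; lra.
  apply: (Rmult_le_reg_l t); first lra.
  by rewrite (_ : t * (s / t) = s); [lra | field; lra].
apply: (Rmult_le_reg_l s) => //.
have -> : s * ((J (dir_point h s) - J x) / s) = J (dir_point h s) - J x by field; lra.
have -> : s * ((J (dir_point h t) - J x) / t) = s / t * (J (dir_point h t) - J x) by field; lra.
lra.
Qed.

Definition diff_quots h := fun v => exists t, 0 < t /\ v = diff_quot h t.
Definition dir_deriv (h : vec m) : R := ER_real (ER_inf (diff_quots h)).

Lemma dir_deriv_real h : ER_inf (diff_quots h) = Fin (dir_deriv h).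
Proof.
apply: ER_inf_real; first by exists (diff_quot h 1), 1; split => //; lra.
by exists (J x - J (dir_point h (-1))) => v [t [t_gt0 ->]]; apply: diff_quot_lb.
Qed.

Lemma dir_deriv_le h t : 0 < t -> dir_deriv h <= diff_quot h t.
Proof. by move=> t_gt0; apply: (ER_inf_lb (dir_deriv_real h)); exists t. Qed.

Lemma dir_deriv_glb h M : (forall t, 0 < t -> M <= diff_quot h t) -> M <= dir_deriv h.
Proof. by move=> M_lb; apply: (ER_inf_glb (dir_deriv_real h)) => v [t [/M_lb le_M ->]]. Qed.

Lemma dir_derivZ c h : 0 < c -> dir_deriv (vscal c h) = c * dir_deriv h.
Proof.
move=> c_gt0.
have quotZ : forall t, 0 < t -> diff_quot (vscal c h) t = c * diff_quot h (t * c).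
  move=> t t_gt0; rewrite /diff_quot (_ : dir_point (vscal c h) t = dir_point h (t * c)).
    by field; lra.
  by apply: functional_extensionality => i; rewrite /dir_point /vscal; ring.
apply: Rle_antisym.
- suff : dir_deriv (vscal c h) / c <= dir_deriv h.
    move/(Rmult_le_compat_l c _ _ (Rlt_le _ _ c_gt0)).
    by rewrite (_ : c * (dir_deriv (vscal c h) / c) = dir_deriv (vscal c h)) //; field; lra.
  apply: dir_deriv_glb => t t_gt0.
  have := dir_deriv_le (vscal c h) (t := t / c) ltac:(apply: Rdiv_lt_0_compat; lra).
  rewrite quotZ; last by apply: Rdiv_lt_0_compat; lra.
  rewrite (_ : t / c * c = t); last by field; lra.
  move=> le_q; apply: (Rmult_le_reg_l c) => //.
  by rewrite (_ : c * (dir_deriv (vscal c h) / c) = dir_deriv (vscal c h)) //; field; lra.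
- apply: dir_deriv_glb => t t_gt0; rewrite quotZ //.
  apply: Rmult_le_compat_l; first lra.
  by apply: dir_deriv_le; apply: Rmult_lt_0_compat.
Qed.

Lemma dir_deriv_subadd h1 h2 : dir_deriv (vadd h1 h2) <= dir_deriv h1 + dir_deriv h2.
Proof.
have quot_le : forall t1 t2, 0 < t1 -> 0 < t2 ->
    dir_deriv (vadd h1 h2) <= diff_quot h1 t1 + diff_quot h2 t2.
  move=> t1 t2 t1_gt0 t2_gt0; set t := Rmin t1 t2.
  have t_gt0 : 0 < t by apply: Rmin_pos.
  have le1 : diff_quot h1 t <= diff_quot h1 t1 by apply: diff_quot_mono => //; apply: Rmin_l.
  have le2 : diff_quot h2 t <= diff_quot h2 t2 by apply: diff_quot_mono => //; apply: Rmin_r.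
  have := dir_deriv_le (vadd h1 h2) (t := t / 2) ltac:(lra).
  have mid : J (dir_point (vadd h1 h2) (t / 2))
             <= / 2 * J (dir_point h1 t) + (1 - / 2) * J (dir_point h2 t).
    by apply: convex_funP => [|i]; [lra | rewrite /dir_point /vadd; field].
  suff : diff_quot (vadd h1 h2) (t / 2) <= diff_quot h1 t + diff_quot h2 t by lra.
  rewrite /diff_quot; apply: (Rmult_le_reg_l (t / 2)); first lra.
  have -> : t / 2 * ((J (dir_point (vadd h1 h2) (t / 2)) - J x) / (t / 2))
    = J (dir_point (vadd h1 h2) (t / 2)) - J x by field; lra.
  have -> : t / 2 * ((J (dir_point h1 t) - J x) / t + (J (dir_point h2 t) - J x) / t)
    = / 2 * (J (dir_point h1 t) - J x) + / 2 * (J (dir_point h2 t) - J x) by field; lra.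
  lra.
have : dir_deriv (vadd h1 h2) - dir_deriv h1 <= dir_deriv h2.
  apply: dir_deriv_glb => t2 t2_gt0.
  suff : dir_deriv (vadd h1 h2) - diff_quot h2 t2 <= dir_deriv h1 by lra.
  by apply: dir_deriv_glb => t1 t1_gt0; have := quot_le t1 t2 t1_gt0 t2_gt0; lra.
lra.
Qed.

Theorem convex_subgradient : exists g : vec m, forall y, J x + dot g (vsub y x) <= J y.
Proof.
case: (hahn_banach dir_deriv_subadd dir_derivZ) => g g_le; exists g => y.
have := g_le (vsub y x); have := dir_deriv_le (vsub y x) (t := 1) ltac:(lra).
have -> : diff_quot (vsub y x) 1 = J y - J x.
  rewrite /diff_quot (_ : dir_point (vsub y x) 1 = y); first by field.
  by apply: functional_extensionality => i; rewrite /dir_point /vsub; ring.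
lra.
Qed.

End ConvexSubgradient.

Lemma subgradient_eq_gradient n (F : vec n -> R) x v a :
  is_gradient F x v -> (forall z, F x + dot a z <= F (vadd x z)) -> a = v.
Proof.
move=> Fv a_sub; set d := vsub a v.
suff d0 : dot d d = 0.
  apply: functional_extensionality => i.
  by have := dot_self_eq0 d0 i; rewrite /d /vsub; lra.
apply: Rle_antisym; last exact: dot_self_ge0.
apply: Rnot_lt_le => dd_gt0; set r := vnorm d.
have r_gt0 : 0 < r by apply: sqrt_lt_R0.
have rr : r * r = dot d d by apply: sqrt_sqrt; lra.
case: (Fv (r / 2) ltac:(lra)) => delta [delta_gt0 Fd].
set t := delta / (2 * r); set h := vscal t d.
have t_gt0 : 0 < t by apply: Rdiv_lt_0_compat; lra.
have hE : vnorm h = delta / 2 by rewrite vnormZ; [rewrite /t -/r; field; lra | lra].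
have := Fd h ltac:(lra); have := a_sub h.
have : dot a h - dot v h = t * (r * r) by rewrite rr -dotBl dotZr.
move=> gap le_h /(Rle_trans _ _ _ (Rle_abs _)) ub; rewrite hE in ub.
have : t * (r * r) = 2 * (r / 2 * (delta / 2)) by rewrite /t; field; lra.
have := Rmult_lt_0_compat _ _ r_gt0 delta_gt0; lra.
Qed.

Section ConvexConjugate.
Variable p : nat.
Variable J : vec p -> R.

Lemma conj_star_ge g j : conj_star J g = Fin j -> forall y, dot g y - J y <= j.
Proof. by move=> gj y; apply: (ER_sup_ub gj); exists y. Qed.

Lemma conj_star_le g M : (forall y, dot g y - J y <= M) ->
  exists j, conj_star J g = Fin j /\ j <= M.
Proof.
move=> M_ub; have gj : conj_star J g = Fin (ER_real (conj_star J g)).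
  apply: ER_sup_real; first by exists (dot g (@vzero p) - J (@vzero p)), (@vzero p).
  by exists M => v [y ->].
by exists (ER_real (conj_star J g)); split => //; apply: (ER_sup_lub gj) => v [y ->].
Qed.

Lemma conj_star_subgradient g y0 : (forall y, J y0 + dot g (vsub y y0) <= J y) ->
  conj_star J g = Fin (dot g y0 - J y0).
Proof.
move=> g_sub; apply: ER_sup_max; first by exists y0.
by move=> v [y ->]; have := g_sub y; rewrite dotBr; lra.
Qed.

Lemma conj_star_neq_MInf g : conj_star J g <> MInf.
Proof. by apply: ER_sup_neq_MInf; exists (dot g (@vzero p) - J (@vzero p)), (@vzero p). Qed.

End ConvexConjugate.

Section Adjoint.
Variables n p : nat.
Variable A : vec n -> vec p.
Variable Astar : vec p -> vec n.
Hypothesis A_adjoint : is_adjoint A Astar.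

Lemma adjoint_comb t g g' :
  Astar (fun l => t * g l + (1 - t) * g' l) = fun i => t * Astar g i + (1 - t) * Astar g' i.
Proof.
apply: vec_dot_inj => z; rewrite dotC -A_adjoint dot_combr !A_adjoint dot_combl.
by rewrite !(dotC z).
Qed.

End Adjoint.

(** * Elementary real analysis *)

Lemma Rabs_le_between x d : Rabs x <= d -> - d <= x <= d.
Proof. by split; [have := Rle_abs (- x); rewrite Rabs_Ropp | have := Rle_abs x]; lra. Qed.

Lemma ln_le_sub1 y : 0 < y -> ln y <= y - 1.
Proof. by move=> y_gt0; have := exp_ineq1_le (ln y); rewrite exp_ln // => ?; lra. Qed.

Lemma xlnx_gt0 x : 0 < x -> xlnx x = x * ln x.
Proof. by move=> x_gt0; rewrite /xlnx; case: Rle_dec => [?|//]; lra. Qed.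

Lemma xlnx_le0 x : x <= 0 -> xlnx x = 0.
Proof. by move=> x_le0; rewrite /xlnx; case: Rle_dec. Qed.

(* The tangent line of [xlnx] at [z], [z ln z + (ln z + 1) (x - z)], also valid at [x = 0]. *)
Lemma xlnx_tangent x z : 0 <= x -> 0 < z -> x * ln z + x - z <= xlnx x.
Proof.
move=> x_ge0 z_gt0; case: (Req_dec x 0) => [->|x_neq0].
  by rewrite xlnx_le0; lra.
have x_gt0 : 0 < x by lra.
rewrite xlnx_gt0 //.
have := ln_le_sub1 (y := z / x) ltac:(apply: Rdiv_lt_0_compat; lra).
rewrite /Rdiv ln_mult ?ln_Rinv //; last exact: Rinv_0_lt_compat.
move=> /(Rmult_le_compat_l x _ _ (Rlt_le _ _ x_gt0)).
by rewrite (_ : x * (z * / x - 1) = z - x); [lra | field; lra].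
Qed.

Lemma xlnx_ge x : 0 <= x -> x - 1 <= xlnx x.
Proof. by move=> x_ge0; have := xlnx_tangent x_ge0 (z := 1) ltac:(lra); rewrite ln_1; lra. Qed.

Lemma xlnx_convex x y t : 0 <= x -> 0 <= y -> 0 <= t <= 1 ->
  xlnx (t * x + (1 - t) * y) <= t * xlnx x + (1 - t) * xlnx y.
Proof.
move=> x_ge0 y_ge0 t01; set z := t * x + (1 - t) * y.
have z_ge0 : 0 <= z by rewrite /z; nra.
case: (Req_dec z 0) => [z0|z_neq0].
  have wx0 : t * xlnx x = 0.
    case: (Req_dec t 0) => [->|t_neq0]; first ring.
    by rewrite (_ : x = 0) ?xlnx_le0; [ring | lra | rewrite /z in z0; nra].
  have wy0 : (1 - t) * xlnx y = 0.
    case: (Req_dec (1 - t) 0) => [->|t_neq1]; first ring.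
    by rewrite (_ : y = 0) ?xlnx_le0; [ring | lra | rewrite /z in z0; nra].
  by rewrite z0 xlnx_le0; lra.
have z_gt0 : 0 < z by lra.
have tx := xlnx_tangent x_ge0 z_gt0; have ty := xlnx_tangent y_ge0 z_gt0.
rewrite xlnx_gt0 //.
have -> : z * ln z = t * (x * ln z + x - z) + (1 - t) * (y * ln z + y - z) by rewrite /z; ring.
by apply: Rplus_le_compat; apply: Rmult_le_compat_l; lra.
Qed.

Lemma xlnx_continuous_gt0 x : 0 < x -> continuity_pt xlnx x.
Proof.
move=> x_gt0; apply: (continuity_pt_locally_ext (fun y => y * ln y) xlnx x x x_gt0).
- move=> y; rewrite /Rdist => xy; rewrite xlnx_gt0 //.
  by move: xy; case: (Rcase_abs (y - x)) => yx; [rewrite Rabs_left | rewrite Rabs_right]; lra.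
- apply: continuity_pt_mult; first exact: derivable_continuous_pt (derivable_pt_id x).
  by apply: derivable_continuous_pt; exists (/ x); apply: derivable_pt_lim_ln.
Qed.

Lemma xlnx_abs_small y : 0 < y < 1 -> Rabs (xlnx y) <= 2 * sqrt y.
Proof.
move=> y01; rewrite xlnx_gt0; last lra.
have sy_gt0 : 0 < sqrt y by apply: sqrt_lt_R0; lra.
have yE : y = sqrt y * sqrt y by rewrite sqrt_sqrt //; lra.
have lnyE : ln y = 2 * ln (sqrt y) by rewrite {1}yE ln_mult //; ring.
have := ln_le_sub1 (Rinv_0_lt_compat _ sy_gt0); rewrite ln_Rinv // => ln_le.
have ln_lt0 : ln y < 0 by rewrite -ln_1; apply: ln_increasing; lra.
rewrite Rabs_left; last by nra.
have -> : - (y * ln y) = 2 * (sqrt y * sqrt y) * (- ln (sqrt y)) by rewrite {1}yE lnyE; ring.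
apply: Rle_trans (_ : 2 * (sqrt y * sqrt y) * / sqrt y <= _).
  by apply: Rmult_le_compat_l; nra.
by right; field; lra.
Qed.

Lemma xlnx_continuous0 : continuity_pt xlnx 0.
Proof.
move=> e e_gt0; exists (Rmin 1 (e * e / 16)); split; first by apply: Rmin_pos; nra.
move=> y [_ ly]; rewrite /= /R_dist (xlnx_le0 (Rle_refl 0)) !Rminus_0_r in ly *.
case: (Rle_dec y 0) => y_le0; first by rewrite xlnx_le0 // Rabs_R0.
have y1 : Rabs y < 1 by apply: Rlt_le_trans ly (Rmin_l _ _).
have ye : Rabs y < e * e / 16 by apply: Rlt_le_trans ly (Rmin_r _ _).
rewrite Rabs_right in y1 ye; try lra.
apply: Rle_lt_trans (xlnx_abs_small _) _; first lra.
have : sqrt y < sqrt (e * e / 16) by apply: sqrt_lt_1; lra.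
by rewrite (_ : e * e / 16 = (e / 4) * (e / 4)) ?sqrt_square; [lra | lra | field].
Qed.

Lemma xlnx_continuous x : continuity_pt xlnx x.
Proof.
case: (Rtotal_order x 0) => [x_lt0|[->|x_gt0]].
- apply: (continuity_pt_locally_ext (fun _ => 0) xlnx (- x) x); first lra.
  + move=> y; rewrite /Rdist => xy; rewrite xlnx_le0 //.
    by move: xy; case: (Rcase_abs (y - x)) => yx; [rewrite Rabs_left | rewrite Rabs_right]; lra.
  + exact: continuity_pt_const.
- exact: xlnx_continuous0.
- exact: xlnx_continuous_gt0.
Qed.

Lemma xlnx_unif_continuous e : 0 < e -> exists d, 0 < d /\
  forall x y, 0 <= x <= 1 -> 0 <= y <= 1 -> Rabs (x - y) < d -> Rabs (xlnx x - xlnx y) < e.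
Proof.
move=> e_gt0.
case: (@Heine_cor2 xlnx 0 1 (fun x _ => xlnx_continuous x) (mkposreal e e_gt0)) => d d_ok.
by exists d; split; [exact: cond_pos | exact: d_ok].
Qed.

Lemma exp_le_quadratic x : Rabs x <= / 2 -> exp x - 1 <= x + 2 * (x * x).
Proof.
move=> /Rabs_le_between x_small.
have ex_ge := exp_ineq1_le (- x).
have : exp x * (1 - x) <= 1.
  have : exp x * exp (- x) = 1 by rewrite -exp_plus Rplus_opp_r exp_0.
  by have := exp_pos x; nra.
move=> ex_le; have : exp x <= / (1 - x).
  by apply: (Rmult_le_reg_r (1 - x)); [lra | rewrite Rinv_l; lra].
have : / (1 - x) - 1 - x <= 2 * (x * x).
  apply: (Rmult_le_reg_r (1 - x)); first lra.
  by rewrite (_ : (/ (1 - x) - 1 - x) * (1 - x) = x * x); [nra | field; lra].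
lra.
Qed.

(** * Entropic optimal transport *)

Section CouplingTransport.
Variable n : nat.
Variables a a' b : vec n.
Variable P : 'I_n -> 'I_n -> R.
Hypothesis a_simplex : simplex a.
Hypothesis a'_simplex : simplex a'.
Hypothesis P_coupling : coupling a b P.

(* Keep the fraction [ratio i] of row [i] of [P] (a zero row when [a i = 0],
   where [/ 0 = 0] makes the ratio harmless) and spread the removed column mass
   [removed j] over the rows where [a'] exceeds [a], proportionally to the excess. *)
Let kept i := Rmin (a i) (a' i).
Let ratio i := kept i / a i.
Let excess := vsum (fun i => a' i - kept i).
Let removed j := vsum (fun i => (1 - ratio i) * P i j).
Let moved i j := ratio i * P i j + (a' i - kept i) * (removed j / excess).

Let kept_ge0 i : 0 <= kept i.
Proof. by apply: Rmin_glb; [case: a_simplex | case: a'_simplex]. Qed.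

Let kept_le i : kept i <= a i /\ kept i <= a' i.
Proof. by split; [apply: Rmin_l | apply: Rmin_r]. Qed.

Let kept_dist i : (a i - kept i) + (a' i - kept i) = Rabs (a i - a' i).
Proof.
rewrite /kept /Rmin; case: Rle_dec => aa'.
- by rewrite Rabs_left1; lra.
- by rewrite Rabs_right; lra.
Qed.

Let ratio_mul i : ratio i * a i = kept i.
Proof.
rewrite /ratio; case: (Req_dec (a i) 0) => [a0|a_neq0]; last by field.
by have := kept_le i; have := kept_ge0 i; rewrite a0; lra.
Qed.

Let ratio01 i : 0 <= ratio i <= 1.
Proof.
case: (Req_dec (a i) 0) => [a0|a_neq0]; first by rewrite /ratio /Rdiv a0 Rinv_0 Rmult_0_r; lra.
have a_gt0 : 0 < a i by case: a_simplex => a_ge0 _; have := a_ge0 i; lra.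
have := kept_le i; have := kept_ge0 i; have := ratio_mul i.
by rewrite /ratio; split; [apply: Rle_mult_inv_pos | nra].
Qed.

Let removed_ge0 j : 0 <= removed j.
Proof.
case: P_coupling => P_ge0 _.
by apply: vsum_ge0 => i; have := ratio01 i; have := P_ge0 i j; nra.
Qed.

Let removed_sum : vsum removed = excess.
Proof.
case: P_coupling => _ [Prow _]; case: a_simplex => _ a1; case: a'_simplex => _ a'1.
rewrite /removed vsum_exchange /excess vsumB a'1 -[in RHS]a1 -vsumB.
by apply: eq_vsum => i; rewrite vsumMl Prow Rmult_minus_distr_r ratio_mul; ring.
Qed.

Let removed_col j : vsum (fun i => ratio i * P i j) + removed j = b j.
Proof.
by case: P_coupling => _ [_ Pcol]; rewrite /removed -vsumD -Pcol; apply: eq_vsum => i; ring.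
Qed.

Let share01 (excess_gt0 : 0 < excess) j : 0 <= removed j / excess <= 1.
Proof.
split; first by apply: Rle_mult_inv_pos; [apply: removed_ge0 |].
apply: (Rmult_le_reg_r excess) => //.
rewrite Rmult_1_l (_ : removed j / excess * excess = removed j).
  by rewrite -removed_sum; apply: vsum_term_le removed_ge0.
by field; lra.
Qed.

Let moved_coupling (excess_gt0 : 0 < excess) : coupling a' b moved.
Proof.
case: P_coupling => P_ge0 [Prow _]; split; [|split].
- move=> i j; apply: Rplus_le_le_0_compat.
  + by have := ratio01 i; have := P_ge0 i j; nra.
  + by apply: Rmult_le_pos; [have := kept_le i | have := share01 excess_gt0 j]; lra.
- move=> i; rewrite vsumD vsumMl Prow ratio_mul vsumMl.
  by rewrite /Rdiv vsumMr removed_sum Rinv_r; lra.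
- move=> j; rewrite vsumD vsumMr -/excess (_ : excess * (removed j / excess) = removed j).
    exact: removed_col.
  by field; lra.
Qed.

Let moved_close (excess_gt0 : 0 < excess) i j : Rabs (moved i j - P i j) <= Rabs (a i - a' i).
Proof.
case: P_coupling => P_ge0 [Prow _].
have -> : moved i j - P i j = (a' i - kept i) * (removed j / excess) - (1 - ratio i) * P i j.
  by rewrite /moved; ring.
have P_le : P i j <= a i by rewrite -Prow; apply: vsum_term_le.
have := ratio_mul i; have := ratio01 i; have := P_ge0 i j; have := kept_le i.
have := share01 excess_gt0 j; rewrite -kept_dist => *.
by apply: Rabs_le; split; nra.
Qed.

Lemma coupling_transport : exists P',
  coupling a' b P' /\ forall i j, Rabs (P' i j - P i j) <= Rabs (a i - a' i).
Proof.
have a_ge i : 0 <= a i - kept i by have := kept_le i; lra.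
have a'_ge i : 0 <= a' i - kept i by have := kept_le i; lra.
case: (Req_dec excess 0) => [excess0|excess_neq0]; last first.
  have : 0 <= excess by apply: vsum_ge0.
  by exists moved; split; [apply: moved_coupling | apply: moved_close]; lra.
have deficit0 : vsum (fun i => a i - kept i) = 0.
  case: a_simplex => _ a1; case: a'_simplex => _ a'1.
  by rewrite vsumB a1 -a'1 -vsumB -excess0.
have a_kept i : a i = kept i by have := vsum_eq0_ge0 a_ge deficit0 i; lra.
have a'_kept i : a' i = kept i by have := vsum_eq0_ge0 a'_ge excess0 i; lra.
have -> : a' = a by apply: functional_extensionality => i; rewrite a_kept a'_kept.
by exists P; split => // i j; rewrite !Rminus_diag Rabs_R0; lra.
Qed.

End CouplingTransport.
Section EntropicTransport.
Variable n : nat.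
Variable eps : R.
Variable C : 'I_n -> 'I_n -> R.
Variable b : vec n.
Hypothesis eps_gt0 : 0 < eps.
Hypothesis b_simplex : simplex b.

Local Notation cost := (ot_cost eps C).
Local Notation F := (Fb eps C b).
Local Notation Fs := (Fb_star eps C b).

Definition cost_bound := vsum (fun i => vsum (fun j : 'I_n => Rabs (C i j) + eps)).

Lemma cost_bound_ge0 : 0 <= cost_bound.
Proof. by apply: vsum_ge0 => i; apply: vsum_ge0 => j; have := Rabs_pos (C i j); lra. Qed.

Lemma ot_costE P :
  cost P = vsum (fun i => vsum (fun j => P i j * C i j + eps * (xlnx (P i j) - P i j))).
Proof.
rewrite /ot_cost /entropy -[in RHS](@eq_vsum _
  (fun i => vsum (fun j => P i j * C i j) + eps * vsum (fun j => xlnx (P i j) - P i j))).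
  by rewrite vsumD vsumMl; ring.
by move=> i; rewrite -vsumMl -vsumD.
Qed.

Lemma coupling_le1 (a : vec n) P i j : simplex a -> coupling a b P -> 0 <= P i j <= 1.
Proof.
move=> a_simplex [P_ge0 [Prow _]]; split => //.
apply: Rle_trans (_ : a i <= 1); last by case: (simplex_le1 i a_simplex).
by rewrite -Prow; apply: (vsum_term_le j (P_ge0 i)).
Qed.

Lemma ot_cost_lb (a : vec n) P : simplex a -> coupling a b P -> - cost_bound <= cost P.
Proof.
move=> a_simplex P_coupling; rewrite ot_costE /cost_bound -vsumN; apply: ler_vsum => i.
rewrite -vsumN; apply: ler_vsum => j.
have [P_ge0 P_le1] := coupling_le1 i j a_simplex P_coupling.
have := xlnx_ge P_ge0.
have : - Rabs (C i j) <= P i j * C i j.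
  by case: (Rcase_abs (C i j)) => Cij; [rewrite Rabs_left | rewrite Rabs_right]; nra.
nra.
Qed.

Lemma product_coupling (a : vec n) : simplex a -> coupling a b (fun i j => a i * b j).
Proof.
move=> [a_ge0 a1]; case: b_simplex => [b_ge0 b1]; split; [|split].
- by move=> i j; apply: Rmult_le_pos.
- by move=> i; rewrite vsumMl b1; ring.
- by move=> j; rewrite vsumMr a1; ring.
Qed.

Definition couplings_cost (a : vec n) := fun w => exists P, coupling a b P /\ w = cost P.

Lemma Fb_real (a : vec n) : simplex a -> ER_inf (couplings_cost a) = Fin (F a).
Proof.
move=> a_simplex; apply: ER_inf_real.
- exists (cost (fun i j => a i * b j)), (fun i j => a i * b j).
  by split => //; apply: product_coupling.
- by exists (- cost_bound) => w [P [P_coupling ->]]; apply: (ot_cost_lb a_simplex).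
Qed.

Lemma Fb_le_cost (a : vec n) P : simplex a -> coupling a b P -> F a <= cost P.
Proof. by move=> a_simplex P_coupling; apply: (ER_inf_lb (Fb_real a_simplex)); exists P. Qed.

Lemma Fb_approx (a : vec n) d : simplex a -> 0 < d ->
  exists P, coupling a b P /\ cost P < F a + d.
Proof.
move=> a_simplex d_gt0.
by case: (ER_inf_approx (Fb_real a_simplex) d_gt0) => w [[P [P_coupling ->]] lt_w]; exists P.
Qed.

Lemma Fb_lb (a : vec n) : simplex a -> - cost_bound <= F a.
Proof.
move=> a_simplex; apply: (ER_inf_glb (Fb_real a_simplex)) => w [P [P_coupling ->]].
exact: ot_cost_lb a_simplex P_coupling.
Qed.

Lemma Fb_convex (a a' : vec n) t : simplex a -> simplex a' -> 0 <= t <= 1 ->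
  F (fun i => t * a i + (1 - t) * a' i) <= t * F a + (1 - t) * F a'.
Proof.
move=> a_simplex a'_simplex t01.
apply: (ER_inf_comb (Fb_real a_simplex) (Fb_real a'_simplex) t01).
move=> _ _ [P [P_coupling ->]] [P' [P'_coupling ->]].
set Q := fun i j => t * P i j + (1 - t) * P' i j.
have Q_coupling : coupling (fun i => t * a i + (1 - t) * a' i) b Q.
  case: P_coupling => [P_ge0 [Prow Pcol]]; case: P'_coupling => [P'_ge0 [P'row P'col]].
  split; [|split].
  - by move=> i j; rewrite /Q; have := P_ge0 i j; have := P'_ge0 i j; nra.
  - by move=> i; rewrite /Q vsumD !vsumMl Prow P'row.
  - by move=> j; rewrite /Q vsumD !vsumMl Pcol P'col; ring.
apply: Rle_trans (Fb_le_cost (simplex_comb a_simplex a'_simplex t01) Q_coupling) _.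
rewrite !ot_costE -!vsumMl -vsumD; apply: ler_vsum => i.
rewrite -!vsumMl -vsumD; apply: ler_vsum => j.
have [P_ge0 _] := coupling_le1 i j a_simplex P_coupling.
have [P'_ge0 _] := coupling_le1 i j a'_simplex P'_coupling.
have := Rmult_le_compat_l eps _ _ (Rlt_le _ _ eps_gt0) (xlnx_convex P_ge0 P'_ge0 t01).
rewrite /Q; lra.
Qed.

Definition dual_values (f : vec n) := fun v => exists a, simplex a /\ v = dot f a - F a.

Lemma Fb_star_real f : ER_sup (dual_values f) = Fin (Fs f).
Proof.
apply: ER_sup_real; first by exists (dot f b - F b), b.
exists (vsum (fun i => Rabs (f i)) + cost_bound) => v [a [a_simplex ->]].
by have := dot_simplex_le f a_simplex; have := Fb_lb a_simplex; lra.
Qed.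

Lemma Fb_star_ge f a : simplex a -> dot f a - F a <= Fs f.
Proof. by move=> a_simplex; apply: (ER_sup_ub (Fb_star_real f)); exists a. Qed.

Lemma Fb_star_lub f M : (forall a, simplex a -> dot f a - F a <= M) -> Fs f <= M.
Proof. by move=> M_ub; apply: (ER_sup_lub (Fb_star_real f)) => v [a [/M_ub le_M ->]]. Qed.

Lemma Fb_star_shift f c : Fs (fun i => f i + c) = Fs f + c.
Proof.
have dot_shift : forall (f : vec n) c (a : vec n),
    simplex a -> dot (fun i => f i + c) a = dot f a + c.
  move=> f' c' a [_ a1]; rewrite /dot -[c' in RHS]Rmult_1_r -a1 -vsumMl -vsumD.
  by apply: eq_vsum => i; ring.
have shift_le : forall (f : vec n) c, Fs (fun i => f i + c) <= Fs f + c.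
  move=> f' c'; apply: Fb_star_lub => a a_simplex.
  by rewrite dot_shift //; have := Fb_star_ge f' a_simplex; lra.
apply: Rle_antisym; first exact: shift_le.
have := shift_le (fun i => f i + c) (- c).
by rewrite (_ : (fun i => f i + c + - c) = f); [lra | apply: functional_extensionality => i; ring].
Qed.

Lemma Fb_star_mono f f' : (forall i, f i <= f' i) -> Fs f <= Fs f'.
Proof.
move=> ff'; apply: Fb_star_lub => a a_simplex; have := Fb_star_ge f' a_simplex.
suff : dot f a <= dot f' a by lra.
by apply: ler_vsum => i; case: a_simplex => a_ge0 _; have := a_ge0 i; have := ff' i; nra.
Qed.

Lemma Fb_star_convex : convex_fun Fs.
Proof.
move=> f f' t t01; apply: Fb_star_lub => a a_simplex; rewrite dot_combl.
have := Rmult_le_compat_l t _ _ (proj1 t01) (Fb_star_ge f a_simplex).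
have := Rmult_le_compat_l (1 - t) _ _ ltac:(lra) (Fb_star_ge f' a_simplex).
lra.
Qed.

(* Shift invariance and monotonicity of [Fs] force every approximate
   subgradient, whatever its accuracy [d], into the simplex. *)
Lemma Fb_star_approx_subgradient_simplex f a d :
  (forall z, Fs f + dot a z - d <= Fs (vadd f z)) -> simplex a.
Proof.
move=> a_sub; split.
- move=> i; apply: Rnot_lt_le => ai_lt0.
  set t := (Rabs d + 1) / - a i.
  have := a_sub (vscal (- t) (basis_vec i)).
  rewrite dotZr dot_basis_vec.
  have -> : - t * a i = Rabs d + 1 by rewrite /t; field; lra.
  have : Fs (vadd f (vscal (- t) (basis_vec i))) <= Fs f.
    apply: Fb_star_mono => j; rewrite /vadd /vscal /basis_vec.
    have : 0 < t by apply: Rdiv_lt_0_compat; [have := Rabs_pos d | ]; lra.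
    by case: eqP => _; lra.
  by have := Rle_abs d; lra.
- apply: NNPP => sum_neq1.
  set c := (Rabs d + 1) / (vsum a - 1).
  have := a_sub (fun _ => c); rewrite dot_constr.
  rewrite (_ : vadd f (fun _ => c) = fun i => f i + c) // Fb_star_shift.
  have : c * vsum a - c = Rabs d + 1 by rewrite /c; field; lra.
  by have := Rle_abs d; lra.
Qed.

Lemma ot_cost_le_close P P' d e :
  (forall i j, Rabs (P' i j - P i j) <= d) ->
  (forall i j, Rabs (xlnx (P' i j) - xlnx (P i j)) <= e) ->
  cost P' <= cost P + d * cost_bound + eps * INR n * INR n * e.
Proof.
move=> P_close xlnx_close; rewrite !ot_costE.
have -> : eps * INR n * INR n * e = vsum (fun i : 'I_n => vsum (fun j : 'I_n => eps * e)).
  by rewrite !vsum_const; ring.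
rewrite /cost_bound -vsumMl -!vsumD; apply: ler_vsum => i.
rewrite -vsumMl -!vsumD; apply: ler_vsum => j.
have := P_close i j; have := xlnx_close i j.
move=> /Rabs_le_between [_ xlnx_le] /Rabs_le_between [dP_ge dP_le].
have : (P' i j - P i j) * C i j <= d * Rabs (C i j).
  apply: Rle_trans (Rle_abs _) _; rewrite Rabs_mult.
  by apply: Rmult_le_compat_r; [apply: Rabs_pos | apply: P_close].
have := Rmult_le_compat_l eps _ _ (Rlt_le _ _ eps_gt0) xlnx_le.
have := Rmult_le_compat_l eps _ _ (Rlt_le _ _ eps_gt0) dP_ge.
nra.
Qed.

Lemma Fb_lsc a0 : simplex a0 -> forall e, 0 < e -> exists d, 0 < d /\
  forall a, simplex a -> dist1 a a0 < d -> F a0 <= F a + e.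
Proof.
move=> a0_simplex e e_gt0.
have nn_ge0 : 0 <= eps * INR n * INR n by have := pos_INR n; nra.
set eta := e / (4 * (eps * INR n * INR n + 1)).
have eta_gt0 : 0 < eta by apply: Rdiv_lt_0_compat; lra.
case: (xlnx_unif_continuous eta_gt0) => d' [d'_gt0 xlnx_unif].
have bound_ge0 := cost_bound_ge0.
exists (Rmin d' (e / (4 * (cost_bound + 1)))); split.
  by apply: Rmin_pos => //; apply: Rdiv_lt_0_compat; lra.
move=> a a_simplex /Rmin_Rgt [dist_lt_d' dist_lt_eK].
case: (Fb_approx a_simplex (d := e / 2)) => [|P [P_coupling P_cost]]; first lra.
case: (coupling_transport a_simplex a0_simplex P_coupling) => P' [P'_coupling P'_close].
have P_close i j : Rabs (P' i j - P i j) <= dist1 a a0.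
  exact: Rle_trans (P'_close i j) (dist1_term_le _ _ _).
have xlnx_close i j : Rabs (xlnx (P' i j) - xlnx (P i j)) <= eta.
  apply/Rlt_le/xlnx_unif; [exact: coupling_le1 a0_simplex P'_coupling|
    exact: coupling_le1 a_simplex P_coupling|].
  exact: Rle_lt_trans (P_close i j) dist_lt_d'.
have := ot_cost_le_close P_close xlnx_close.
have := Fb_le_cost a0_simplex P'_coupling.
have : dist1 a a0 * cost_bound <= e / 4.
  apply: Rle_trans (_ : e / (4 * (cost_bound + 1)) * (cost_bound + 1) <= _).
    by have := dist1_ge0 a a0; nra.
  by right; field; lra.
have : eps * INR n * INR n * eta <= e / 4.
  apply: (Rmult_le_reg_r (4 * (eps * INR n * INR n + 1))); first lra.
  rewrite (_ : eps * INR n * INR n * eta * _ = eps * INR n * INR n * e); first nra.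
  by rewrite /eta; field; lra.
lra.
Qed.

Section Envelope.
Variable M : R.
Hypothesis M_ge0 : 0 <= M.

Definition penalized_values (x : vec n) := fun v => exists a, simplex a /\ v = F a + M * dist1 x a.

(* Inf-convolution of [F] with [M] times the l1 distance; unlike [F], which is
   only meaningful on the simplex, it is a genuine convex function on the whole space. *)
Definition Fb_envelope (x : vec n) := ER_real (ER_inf (penalized_values x)).

Lemma Fb_envelope_real x : ER_inf (penalized_values x) = Fin (Fb_envelope x).
Proof.
apply: ER_inf_real; first by exists (F b + M * dist1 x b), b.
exists (- cost_bound) => v [a [a_simplex ->]].
by have := Fb_lb a_simplex; have := dist1_ge0 x a; nra.
Qed.

Lemma Fb_envelope_le x a : simplex a -> Fb_envelope x <= F a + M * dist1 x a.
Proof. by move=> a_simplex; apply: (ER_inf_lb (Fb_envelope_real x)); exists a. Qed.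

Lemma Fb_envelope_convex : convex_fun Fb_envelope.
Proof.
move=> x y t t01; apply: (ER_inf_comb (Fb_envelope_real x) (Fb_envelope_real y) t01).
move=> _ _ [a [a_simplex ->]] [a' [a'_simplex ->]].
apply: Rle_trans (Fb_envelope_le _ (simplex_comb a_simplex a'_simplex t01)) _.
have := Fb_convex a_simplex a'_simplex t01.
have := Rmult_le_compat_l M _ _ M_ge0 (dist1_comb x y a a' t01).
lra.
Qed.

End Envelope.

(* The dual vector is a subgradient of the envelope at [a0]: near [a0] lower
   semicontinuity keeps the envelope close to [F a0], far from [a0] the penalty does. *)
Lemma Fb_biconj a0 : simplex a0 -> forall e, 0 < e ->
  exists f : vec n, F a0 <= dot f a0 - Fs f + e.
Proof.
move=> a0_simplex e e_gt0.
case: (Fb_lsc a0_simplex (e := e)) => // d [d_gt0 lsc].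
set M := (F a0 + cost_bound + e) / d.
have M_ge0 : 0 <= M by apply: Rle_mult_inv_pos => //; have := Fb_lb a0_simplex; lra.
case: (convex_subgradient (Fb_envelope_convex M_ge0) a0) => f f_sub; exists f.
have : Fs f <= dot f a0 - Fb_envelope M a0.
  apply: Fb_star_lub => a a_simplex.
  have := f_sub a; have := Fb_envelope_le M_ge0 a a_simplex.
  rewrite /dist1 (eq_vsum (g := fun _ => 0)) ?vsum0 ?dotBr; first lra.
  by move=> i; rewrite Rminus_diag Rabs_R0.
have : F a0 - e <= Fb_envelope M a0.
  apply: (ER_inf_glb (Fb_envelope_real M_ge0 a0)) => v [a [a_simplex ->]].
  have := Fb_lb a_simplex; have := Rmult_le_pos _ _ M_ge0 (dist1_ge0 a0 a).
  case: (Rlt_le_dec (dist1 a a0) d) => [/(lsc a a_simplex)|]; first lra.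
  rewrite dist1C => le_d; have := Rmult_le_compat_l M _ _ M_ge0 le_d.
  by rewrite (_ : M * d = F a0 + cost_bound + e); [lra | rewrite /M; field; lra].
lra.
Qed.

(* The maximizer in the definition of [Fs f], jointly over marginals and
   couplings: the Gibbs kernel with its columns rescaled to the marginal [b]. *)
Definition partition (f : vec n) (j : 'I_n) := vsum (fun i => exp ((f i - C i j) / eps)).
Definition gibbs_kernel (f : vec n) (i j : 'I_n) := exp ((f i - C i j) / eps) / partition f j.
Definition gibbs_plan (f : vec n) (i j : 'I_n) := b j * gibbs_kernel f i j.
Definition gibbs_marginal (f : vec n) : vec n := fun i => vsum (fun j => gibbs_plan f i j).

Definition Fb_star_formula (f : vec n) :=
  eps * vsum (fun j => b j * ln (partition f j)) - eps * vsum (fun j => xlnx (b j)) + eps.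

Lemma partition_gt0 f j : 0 < partition f j.
Proof.
apply: Rlt_le_trans (exp_pos ((f j - C j j) / eps)) _.
exact: (vsum_term_le j (fun i => Rlt_le _ _ (exp_pos _))).
Qed.

Lemma gibbs_kernel_ge0 f i j : 0 <= gibbs_kernel f i j.
Proof. by apply: Rle_mult_inv_pos; [apply/Rlt_le/exp_pos | apply: partition_gt0]. Qed.

Lemma gibbs_kernel_sum f j : vsum (fun i => gibbs_kernel f i j) = 1.
Proof.
rewrite /gibbs_kernel /Rdiv vsumMr -/(partition f j) Rinv_r //.
by have := partition_gt0 f j; lra.
Qed.

Lemma gibbs_plan_coupling f : coupling (gibbs_marginal f) b (gibbs_plan f).
Proof.
case: b_simplex => b_ge0 _; split; [|split] => //.
- by move=> i j; apply: Rmult_le_pos => //; apply: gibbs_kernel_ge0.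
- by move=> j; rewrite vsumMl gibbs_kernel_sum Rmult_1_r.
Qed.

Lemma gibbs_marginal_simplex f : simplex (gibbs_marginal f).
Proof.
have [P_ge0 [_ Pcol]] := gibbs_plan_coupling f.
split; first by move=> i; apply: vsum_ge0.
by rewrite /gibbs_marginal vsum_exchange (eq_vsum Pcol); case: b_simplex.
Qed.

(* Tangent inequality of [xlnx] at [exp u * B / Z]; equality holds at
   [q = B * exp u / Z], the Gibbs value. *)
Lemma entropy_term_le q u B Z : 0 <= q -> 0 < B -> 0 < Z ->
  q * u - xlnx q <= q * (ln Z - ln B) - q + exp u * B / Z.
Proof.
move=> q_ge0 B_gt0 Z_gt0.
have eB_gt0 : 0 < exp u * B by apply: Rmult_lt_0_compat => //; apply: exp_pos.
have := xlnx_tangent q_ge0 (Rdiv_lt_0_compat _ _ eB_gt0 Z_gt0).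
rewrite /Rdiv !ln_mult ?ln_Rinv ?ln_exp //; [lra | exact: exp_pos | exact: Rinv_0_lt_compat].
Qed.

Lemma entropy_term_eq u B Z : 0 < B -> 0 < Z ->
  let q := B * exp u / Z in q * u - xlnx q = q * (ln Z - ln B) - q + exp u * B / Z.
Proof.
move=> B_gt0 Z_gt0 q.
have Be_gt0 : 0 < B * exp u by apply: Rmult_lt_0_compat => //; apply: exp_pos.
rewrite xlnx_gt0 /q; last exact: Rdiv_lt_0_compat.
rewrite /Rdiv !ln_mult ?ln_Rinv ?ln_exp //; [ring | exact: exp_pos | exact: Rinv_0_lt_compat].
Qed.

Lemma column_entropy_le (q : vec n) j f : (forall i, 0 <= q i) -> vsum q = b j ->
  vsum (fun i => q i * ((f i - C i j) / eps) - xlnx (q i)) <= b j * ln (partition f j) - xlnx (b j).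
Proof.
move=> q_ge0 q_sum; case: b_simplex => b_ge0 _.
case: (Req_dec (b j) 0) => [b0|b_neq0].
- have q0 := vsum_eq0_ge0 q_ge0 (esym (etrans (esym b0) (esym q_sum))).
  rewrite b0 Rmult_0_l xlnx_le0 ?Rminus_0_r; last lra.
  rewrite (eq_vsum (g := fun _ => 0)) ?vsum0; first lra.
  by move=> i; rewrite q0 xlnx_le0; [ring | lra].
- have b_gt0 : 0 < b j by have := b_ge0 j; lra.
  apply: Rle_trans (ler_vsum (fun i => entropy_term_le ((f i - C i j) / eps) (q_ge0 i)
    b_gt0 (partition_gt0 f j))) _.
  rewrite vsumD vsumB vsumMr q_sum.
  rewrite (eq_vsum (g := fun i => b j / partition f j * exp ((f i - C i j) / eps))); last first.
    by move=> i; rewrite /Rdiv; ring.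
  rewrite vsumMl -/(partition f j) xlnx_gt0 //.
  by right; field; have := partition_gt0 f j; lra.
Qed.

Lemma column_entropy_gibbs j f :
  vsum (fun i => gibbs_plan f i j * ((f i - C i j) / eps) - xlnx (gibbs_plan f i j))
  = b j * ln (partition f j) - xlnx (b j).
Proof.
case: b_simplex => b_ge0 _.
case: (Req_dec (b j) 0) => [b0|b_neq0].
- rewrite b0 Rmult_0_l xlnx_le0 ?Rminus_0_r; last lra.
  rewrite (eq_vsum (g := fun _ => 0)) ?vsum0 //.
  by move=> i; rewrite /gibbs_plan b0 Rmult_0_l xlnx_le0; [ring | lra].
- have b_gt0 : 0 < b j by have := b_ge0 j; lra.
  have Z_gt0 := partition_gt0 f j.
  rewrite (eq_vsum (g := fun i => gibbs_plan f i j * (ln (partition f j) - ln (b j))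
      - gibbs_plan f i j + exp ((f i - C i j) / eps) * b j / partition f j)); last first.
    move=> i; have := entropy_term_eq ((f i - C i j) / eps) b_gt0 Z_gt0.
    by rewrite /gibbs_plan /gibbs_kernel /Rdiv !Rmult_assoc.
  have [_ [_ Pcol]] := gibbs_plan_coupling f.
  rewrite vsumD vsumB vsumMr Pcol.
  rewrite (eq_vsum (g := fun i => b j / partition f j * exp ((f i - C i j) / eps))); last first.
    by move=> i; rewrite /Rdiv; ring.
  by rewrite vsumMl -/(partition f j) xlnx_gt0 //; field; lra.
Qed.

Lemma dual_gapE (f a : vec n) P : coupling a b P ->
  dot f a - cost P
  = eps * vsum (fun j => vsum (fun i => P i j * ((f i - C i j) / eps) - xlnx (P i j))) + eps.
Proof.
move=> [_ [Prow Pcol]].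
have -> : dot f a - cost P
    = vsum (fun i => vsum (fun j => f i * P i j - (P i j * C i j + eps * (xlnx (P i j) - P i j)))).
  rewrite ot_costE /dot -(vsumB (fun i => f i * a i)); apply: eq_vsum => i.
  by rewrite -(Prow i) -vsumMl -vsumB.
have epsE : eps = vsum (fun i => vsum (fun j => eps * P i j)).
  rewrite vsum_exchange (eq_vsum (g := fun j => eps * b j)); last by move=> j; rewrite vsumMl Pcol.
  by rewrite vsumMl; case: b_simplex => _ ->; ring.
have scaled : eps * vsum (fun j => vsum (fun i => P i j * ((f i - C i j) / eps) - xlnx (P i j)))
    = vsum (fun i => vsum (fun j => eps * (P i j * ((f i - C i j) / eps) - xlnx (P i j)))).
  by rewrite -vsumMl vsum_exchange; apply: eq_vsum => i; rewrite vsumMl.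
rewrite scaled [X in _ = _ + X]epsE -vsumD; apply: eq_vsum => i.
rewrite -vsumD; apply: eq_vsum => j.
by field; lra.
Qed.

Lemma gibbs_dual_gap f : dot f (gibbs_marginal f) - cost (gibbs_plan f) = Fb_star_formula f.
Proof.
rewrite dual_gapE; last exact: gibbs_plan_coupling.
by rewrite /Fb_star_formula (eq_vsum (fun j => column_entropy_gibbs j f)) vsumB; ring.
Qed.

Lemma Fb_starE f : Fs f = Fb_star_formula f.
Proof.
apply: Rle_antisym.
- apply: Fb_star_lub => a a_simplex; apply: Rnot_lt_le => lt_formula.
  case: (Fb_approx a_simplex (d := dot f a - F a - Fb_star_formula f)) => [|P [P_coupling P_cost]].
    lra.
  suff : dot f a - cost P <= Fb_star_formula f by lra.
  rewrite dual_gapE // /Fb_star_formula.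
  have : vsum (fun j => vsum (fun i => P i j * ((f i - C i j) / eps) - xlnx (P i j)))
         <= vsum (fun j => b j * ln (partition f j) - xlnx (b j)).
    case: P_coupling => [P_ge0 [_ Pcol]].
    by apply: ler_vsum => j; apply: column_entropy_le.
  rewrite vsumB => /(Rmult_le_compat_l eps _ _ (Rlt_le _ _ eps_gt0)); lra.
- have := Fb_star_ge f (gibbs_marginal_simplex f); have := gibbs_dual_gap f.
  by have := Fb_le_cost (gibbs_marginal_simplex f) (gibbs_plan_coupling f); lra.
Qed.

Lemma Fb_gibbs_marginal f : F (gibbs_marginal f) = dot f (gibbs_marginal f) - Fs f.
Proof.
apply: Rle_antisym; last by have := Fb_star_ge f (gibbs_marginal_simplex f); lra.
have := Fb_le_cost (gibbs_marginal_simplex f) (gibbs_plan_coupling f).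
by have := gibbs_dual_gap f; rewrite Fb_starE; lra.
Qed.

Lemma Fb_star_gibbs_subgradient f h : Fs f + dot h (gibbs_marginal f) <= Fs (vadd f h).
Proof.
have := Fb_star_ge (vadd f h) (gibbs_marginal_simplex f).
by rewrite dotDl Fb_gibbs_marginal; lra.
Qed.

Lemma ln_partition_shift_le f h j : (forall i, Rabs (h i) <= eps / 2) ->
  ln (partition (vadd f h) j) - ln (partition f j)
  <= vsum (fun i => gibbs_kernel f i j * (h i / eps + 2 * (h i / eps * (h i / eps)))).
Proof.
move=> h_small; have Z_gt0 := partition_gt0 f j; have Zh_gt0 := partition_gt0 (vadd f h) j.
have -> : ln (partition (vadd f h) j) - ln (partition f j)
          = ln (partition (vadd f h) j / partition f j).
  by rewrite /Rdiv ln_mult ?ln_Rinv //; try ring; exact: Rinv_0_lt_compat.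
have ratioE : partition (vadd f h) j / partition f j
              = vsum (fun i => gibbs_kernel f i j * exp (h i / eps)).
  rewrite /Rdiv -vsumMr; apply: eq_vsum => i; rewrite /gibbs_kernel /vadd /Rdiv.
  rewrite (_ : (f i + h i - C i j) * / eps = (f i - C i j) * / eps + h i * / eps) ?exp_plus; ring.
apply: Rle_trans (ln_le_sub1 (Rdiv_lt_0_compat _ _ Zh_gt0 Z_gt0)) _.
rewrite ratioE -[X in _ - X](gibbs_kernel_sum f j) -vsumB; apply: ler_vsum => i.
have : exp (h i / eps) - 1 <= h i / eps + 2 * (h i / eps * (h i / eps)).
  apply: exp_le_quadratic; rewrite /Rdiv Rabs_mult (Rabs_right (/ eps)); last first.
    by apply: Rle_ge; apply: Rlt_le; apply: Rinv_0_lt_compat.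
  apply: (Rmult_le_reg_r eps) => //; rewrite Rmult_assoc Rinv_l; have := h_small i; lra.
by have := gibbs_kernel_ge0 f i j; nra.
Qed.

Lemma Fb_star_quadratic_upper f h : (forall i, Rabs (h i) <= eps / 2) ->
  Fs (vadd f h) <= Fs f + dot h (gibbs_marginal f) + 2 / eps * dot h h.
Proof.
move=> h_small; rewrite !Fb_starE /Fb_star_formula.
suff : eps * vsum (fun j => b j * ln (partition (vadd f h) j))
       - eps * vsum (fun j => b j * ln (partition f j))
       <= dot h (gibbs_marginal f) + 2 / eps * vsum (fun i => h i * h i * gibbs_marginal f i).
  have : vsum (fun i => h i * h i * gibbs_marginal f i) <= dot h h.
    apply: ler_vsum => i; have [m_ge0 m_le1] := simplex_le1 i (gibbs_marginal_simplex f).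
    by have := Rle_0_sqr (h i); rewrite /Rsqr; nra.
  move=> /(Rmult_le_compat_l (2 / eps) _ _ (Rlt_le _ _ (Rdiv_lt_0_compat _ _ Rlt_0_2 eps_gt0))).
  lra.
case: b_simplex => b_ge0 _.
rewrite -!vsumMl -vsumB.
apply: Rle_trans (_ : vsum (fun j => eps * b j * vsum (fun i => gibbs_kernel f i j
    * (h i / eps + 2 * (h i / eps * (h i / eps))))) <= _).
  apply: ler_vsum => j; rewrite (_ : _ - _ = eps * b j
    * (ln (partition (vadd f h) j) - ln (partition f j))); last by ring.
  apply: Rmult_le_compat_l; first by have := b_ge0 j; nra.
  exact: ln_partition_shift_le.
right; rewrite /dot -vsumD.
rewrite (eq_vsum (f := fun i => h i * gibbs_marginal f i + _)
  (g := fun i => vsum (fun j => b j * gibbs_kernel f i j * (h i + 2 / eps * (h i * h i))))).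
  rewrite vsum_exchange; apply: eq_vsum => j.
  by rewrite -vsumMl; apply: eq_vsum => i; field; lra.
by move=> i; rewrite /gibbs_marginal /gibbs_plan vsumMr; ring.
Qed.

Lemma Fb_star_gradient f : is_gradient Fs f (gibbs_marginal f).
Proof.
move=> e e_gt0; exists (Rmin (eps / 2) (e * eps / 2)); split; first by apply: Rmin_pos; nra.
move=> h /Rmin_Rgt [h_lt1 h_lt2]; have norm_ge0 := sqrt_pos (dot h h).
have h_le i : Rabs (h i) <= vnorm h.
  rewrite /vnorm -sqrt_Rsqr_abs; apply: sqrt_le_1_alt.
  by rewrite /Rsqr; apply: (vsum_term_le i (fun i => Rle_0_sqr (h i))).
have := Fb_star_quadratic_upper f (fun i => Rlt_le _ _ (Rle_lt_trans _ _ _ (h_le i) h_lt1)).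
have := Fb_star_gibbs_subgradient f h.
have hh : dot h h = vnorm h * vnorm h by rewrite /vnorm sqrt_sqrt //; apply: dot_self_ge0.
rewrite (dotC h) => lower upper; rewrite Rabs_right; last lra.
have : 2 / eps * dot h h <= e * vnorm h.
  rewrite hh (_ : 2 / eps * _ = (2 / eps * vnorm h) * vnorm h); last by ring.
  apply: Rmult_le_compat_r => //; apply: (Rmult_le_reg_r (eps / 2)); first lra.
  by rewrite (_ : 2 / eps * vnorm h * (eps / 2) = vnorm h); [lra | field; lra].
lra.
Qed.

End EntropicTransport.

(** * Duality *)

Section Duality.
Variables (n N p : nat) (eps : R) (C : 'I_n -> 'I_n -> R) (b : 'I_N -> vec n) (lam : vec N)
  (A : vec n -> vec p) (Astar : vec p -> vec n) (J : vec p -> R).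
Hypothesis eps_gt0 : 0 < eps.
Hypothesis b_simplex : forall k, simplex (b k).
Hypothesis lam_simplex : simplex lam.
Hypothesis lam_gt0 : forall k, 0 < lam k.
Hypothesis A_adjoint : is_adjoint A Astar.
Hypothesis J_convex : convex_fun J.

Local Notation P := (primal_obj eps C b lam A J).
Local Notation Fs k := (Fb_star eps C (b k)).

Definition perturbed_feasible (x : vec n) (f : 'I_N -> vec n) (g : vec p) :=
  forall i, Astar g i + vsum (fun k => lam k * f k i) = x i.

Definition perturbed_dual_values (x : vec n) := fun v => exists f g,
  perturbed_feasible x f g /\ dual_obj eps C b lam J f g = Fin v.

Definition dual_sum (f : 'I_N -> vec n) := vsum (fun k => lam k * Fs k (f k)).

(* The value function of the dual problem under the perturbation [x] of its
   constraint; its subgradients at [0] are the primal solutions. *)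
Definition dual_value (x : vec n) := ER_real (ER_inf (perturbed_dual_values x)).

Lemma perturbed_dual_valuesP x v : perturbed_dual_values x v ->
  exists f g j, perturbed_feasible x f g /\ conj_star J g = Fin j /\ v = dual_sum f + j.
Proof.
by move=> [f [g [fg_feas /ER_plusR_Fin [j [gj ->]]]]]; exists f, g, j.
Qed.

Lemma perturbed_dual_values_intro x f g j :
  perturbed_feasible x f g -> conj_star J g = Fin j -> perturbed_dual_values x (dual_sum f + j).
Proof. by move=> fg_feas gj; exists f, g; split => //; rewrite /dual_obj gj. Qed.

Lemma exists_weight_gt0 : exists k0 : 'I_N, 0 < lam k0.
Proof. by case: lam_simplex => lam_ge0 lam1; apply: vsum_gt0_exists => //; lra. Qed.

Lemma perturbed_feasible_dot x f g a : perturbed_feasible x f g ->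
  vsum (fun k => lam k * dot (f k) a) = dot x a - dot g (A a).
Proof.
move=> fg_feas; rewrite vsum_dot_weighted (dotC g) A_adjoint (dotC a (Astar g)) -dotBl.
by apply: eq_dot => // i; rewrite /vsub -(fg_feas i); ring.
Qed.

Lemma weak_duality x a v : simplex a -> perturbed_dual_values x v -> dot x a - P a <= v.
Proof.
move=> a_simplex /perturbed_dual_valuesP [f [g [j [fg_feas [gj ->]]]]].
have : vsum (fun k => lam k * dot (f k) a - lam k * Fb eps C (b k) a) <= dual_sum f.
  apply: ler_vsum => k; rewrite -Rmult_minus_distr_l.
  apply: Rmult_le_compat_l; first exact: Rlt_le.
  exact: Fb_star_ge.
have := conj_star_ge gj (A a).
by rewrite vsumB (perturbed_feasible_dot a fg_feas) /primal_obj; lra.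
Qed.

Lemma perturbed_dual_values_nonempty x : exists v, perturbed_dual_values x v.
Proof.
case: exists_weight_gt0 => k0 lam_k0.
case: (convex_subgradient J_convex (@vzero p)) => g0 /conj_star_subgradient g0j.
set f := fun k => if k == k0 then fun i => (x i - Astar g0 i) / lam k0 else @vzero n.
exists (dual_sum f + (dot g0 (@vzero p) - J (@vzero p))); apply: perturbed_dual_values_intro g0j.
move=> i; rewrite (vsum_delta (k := k0)) /f ?eqxx; first by field; lra.
by move=> k /negbTE ->; rewrite /vzero; ring.
Qed.

Lemma dual_value_real x : ER_inf (perturbed_dual_values x) = Fin (dual_value x).
Proof.
apply: ER_inf_real; first exact: perturbed_dual_values_nonempty.
case: exists_weight_gt0 => k0 _.
by exists (dot x (b k0) - P (b k0)) => v; apply: weak_duality.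
Qed.

Lemma dual_value_le x v : perturbed_dual_values x v -> dual_value x <= v.
Proof. exact: (ER_inf_lb (dual_value_real x)). Qed.

Lemma dual_value_glb x m : (forall v, perturbed_dual_values x v -> m <= v) -> m <= dual_value x.
Proof. exact: (ER_inf_glb (dual_value_real x)). Qed.

Lemma dual_value_convex : convex_fun dual_value.
Proof.
move=> x y t t01; apply: (ER_inf_comb (dual_value_real x) (dual_value_real y) t01).
move=> u v /perturbed_dual_valuesP [f [g [j [fg_feas [gj ->]]]]].
move=> /perturbed_dual_valuesP [f' [g' [j' [fg'_feas [gj' ->]]]]].
set ft := fun k i => t * f k i + (1 - t) * f' k i.
set gt := fun l => t * g l + (1 - t) * g' l.
case: (@conj_star_le p J gt (t * j + (1 - t) * j')) => [z|jt [gjt jt_le]].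
  rewrite dot_combl.
  have := Rmult_le_compat_l t _ _ (proj1 t01) (conj_star_ge gj z).
  have := Rmult_le_compat_l (1 - t) _ _ ltac:(lra) (conj_star_ge gj' z).
  lra.
have ft_feas : perturbed_feasible (fun i => t * x i + (1 - t) * y i) ft gt.
  move=> i; rewrite /gt (adjoint_comb A_adjoint) /ft.
  rewrite (eq_vsum (g := fun k => t * (lam k * f k i) + (1 - t) * (lam k * f' k i))).
    by rewrite vsumD !vsumMl -(fg_feas i) -(fg'_feas i); ring.
  by move=> k; ring.
apply: Rle_trans (dual_value_le (perturbed_dual_values_intro ft_feas gjt)) _.
suff : dual_sum ft <= t * dual_sum f + (1 - t) * dual_sum f' by lra.
rewrite /dual_sum -!vsumMl -vsumD; apply: ler_vsum => k.
have := Fb_star_convex C eps_gt0 (b_simplex k) (f k) (f' k) t01.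
by move=> /(Rmult_le_compat_l (lam k) _ _ (Rlt_le _ _ (lam_gt0 k))); rewrite -/(ft k); lra.
Qed.

Lemma dual_value_perturb_component f g j k z :
  perturbed_feasible (@vzero n) f g -> conj_star J g = Fin j ->
  dual_value (vscal (lam k) z) <= dual_sum f + j + lam k * (Fs k (vadd (f k) z) - Fs k (f k)).
Proof.
move=> fg_feas gj; set f' := fun k' => if k' == k then vadd (f k) z else f k'.
have f'_feas : perturbed_feasible (vscal (lam k) z) f' g.
  move=> i; rewrite (eq_vsum (g := fun k' => if k' == k then lam k * (f k i + z i)
                                             else lam k' * f k' i)); last first.
    by move=> k'; rewrite /f'; case: eqP => [->|].
  by rewrite vsum_update; have := fg_feas i; rewrite /vzero /vscal; lra.
apply: Rle_trans (dual_value_le (perturbed_dual_values_intro f'_feas gj)) _.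
rewrite /dual_sum (eq_vsum (g := fun k' => if k' == k then lam k * Fs k (vadd (f k) z)
                                           else lam k' * Fs k' (f k'))); last first.
  by move=> k'; rewrite /f'; case: eqP => [->|].
by rewrite vsum_update; lra.
Qed.

Lemma dual_minimizer_value f g : dual_minimizer eps C b lam Astar J f g ->
  exists j, conj_star J g = Fin j /\ dual_sum f + j = dual_value (@vzero n).
Proof.
move=> [fg_feas fg_min].
have [j gj] : exists j, conj_star J g = Fin j.
  case gE: (conj_star J g) => [j| |]; first by exists j.
  - case: (perturbed_dual_values_nonempty (@vzero n)) => v [f' [g' [fg'_feas fg'_v]]].
    by have := fg_min f' g' fg'_feas; rewrite fg'_v /dual_obj gE.
  - by have := @conj_star_neq_MInf p J g.
exists j; split => //; apply: Rle_antisym.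
- apply: dual_value_glb => v [f' [g' [fg'_feas fg'_v]]].
  by have := fg_min f' g' fg'_feas; rewrite fg'_v /dual_obj gj.
- exact: dual_value_le (perturbed_dual_values_intro fg_feas gj).
Qed.

Section PrimalSolution.
Variable a0 : vec n.
Hypothesis a0_subgradient :
  forall x, dual_value (@vzero n) + dot a0 (vsub x (@vzero n)) <= dual_value x.

Lemma dual_value_subgradient x : dual_value (@vzero n) + dot a0 x <= dual_value x.
Proof.
have := a0_subgradient x; suff -> : vsub x (@vzero n) = x by [].
by apply: functional_extensionality => i; rewrite /vsub /vzero; ring.
Qed.

Lemma subgradient_approx_Fb_star f g j k :
  perturbed_feasible (@vzero n) f g -> conj_star J g = Fin j -> forall z,
  Fs k (f k) + dot a0 z - (dual_sum f + j - dual_value (@vzero n)) / lam k <= Fs k (vadd (f k) z).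
Proof.
move=> fg_feas gj z; have lam_k := lam_gt0 k.
have := dual_value_perturb_component k z fg_feas gj.
have := dual_value_subgradient (vscal (lam k) z); rewrite dotZr => le1 le2.
apply: (Rmult_le_reg_l (lam k)) => //.
rewrite (_ : lam k * (_ - _ / lam k) = lam k * Fs k (f k) + lam k * dot a0 z
  - (dual_sum f + j - dual_value (@vzero n))); last by field; lra.
lra.
Qed.

Lemma subgradient_simplex : simplex a0.
Proof.
case: exists_weight_gt0 => k0 _.
case: (perturbed_dual_values_nonempty (@vzero n)) => v /perturbed_dual_valuesP.
move=> [f [g [j [fg_feas [gj _]]]]].
exact: Fb_star_approx_subgradient_simplex (subgradient_approx_Fb_star k0 fg_feas gj).
Qed.

(* Near-optimal dual vectors for [F_b] (biconjugation) and a subgradient of [J]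
   at [A a] combine into a perturbation [x] witnessing [P a] in the conjugate
   of the dual value function. *)
Lemma primal_le_conj_dual_value a e : simplex a -> 0 < e ->
  exists x, P a - e <= dot x a - dual_value x.
Proof.
move=> a_simplex e_gt0.
have biconj k := Fb_biconj C eps_gt0 (b_simplex k) a_simplex e_gt0.
set f := fun k => proj1_sig (constructive_indefinite_description _ (biconj k)).
have f_spec k : Fb eps C (b k) a <= dot (f k) a - Fs k (f k) + e.
  exact: proj2_sig (constructive_indefinite_description _ (biconj k)).
case: (convex_subgradient J_convex (A a)) => g /conj_star_subgradient gj.
set x := fun i => Astar g i + vsum (fun k => lam k * f k i).
have fg_feas : perturbed_feasible x f g by [].
exists x; have := dual_value_le (perturbed_dual_values_intro fg_feas gj).
have := perturbed_feasible_dot a fg_feas.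
have : vsum (fun k => lam k * Fb eps C (b k) a)
       <= vsum (fun k => lam k * dot (f k) a) - dual_sum f + e.
  case: lam_simplex => _ lam1; rewrite /dual_sum -vsumB -[e]Rmult_1_l -lam1 -vsumMr -vsumD.
  apply: ler_vsum => k; have := Rmult_le_compat_l _ _ _ (Rlt_le _ _ (lam_gt0 k)) (f_spec k).
  lra.
by rewrite /primal_obj; lra.
Qed.

Lemma primal_subgradient_le : P a0 <= - dual_value (@vzero n).
Proof.
apply: Rnot_lt_le => lt_P; set e := (P a0 + dual_value (@vzero n)) / 2.
case: (primal_le_conj_dual_value subgradient_simplex (e := e)) => [|x]; first by rewrite /e; lra.
by have := dual_value_subgradient x; rewrite (dotC a0) /e; lra.
Qed.

Lemma dual_minimizer_gradient f g : dual_minimizer eps C b lam Astar J f g ->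
  forall k, is_gradient (Fs k) (f k) a0.
Proof.
move=> fg_min k; have [fg_feas _] := fg_min.
case: (dual_minimizer_value fg_min) => j [gj fg_val].
suff -> : a0 = gibbs_marginal eps C (b k) (f k) by apply: Fb_star_gradient.
apply: subgradient_eq_gradient (Fb_star_gradient C eps_gt0 (b_simplex k) (f k)) _ => z.
have := subgradient_approx_Fb_star k fg_feas gj z.
by rewrite fg_val Rminus_diag /Rdiv Rmult_0_l Rminus_0_r.
Qed.

End PrimalSolution.

Lemma dual_value_le_primal a : simplex a -> - dual_value (@vzero n) <= P a.
Proof.
move=> a_simplex; suff : - P a <= dual_value (@vzero n) by lra.
apply: dual_value_glb => v /(weak_duality a_simplex); rewrite dot0l; lra.
Qed.

Lemma dual_infE : dual_inf eps C b lam Astar J = Fin (dual_value (@vzero n)).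
Proof. exact: dual_value_real. Qed.

Lemma primal_dual_solution : exists a0, simplex a0 /\
  (forall a, simplex a -> P a0 <= P a) /\ P a0 = - dual_value (@vzero n) /\
  (forall f g, dual_minimizer eps C b lam Astar J f g -> forall k, is_gradient (Fs k) (f k) a0).
Proof.
case: (convex_subgradient dual_value_convex (@vzero n)) => a0 a0_sub.
have a0_simplex := subgradient_simplex a0_sub.
have P_a0 := primal_subgradient_le a0_sub.
exists a0; split; [done | split; [|split]].
- by move=> a /dual_value_le_primal; lra.
- by have := dual_value_le_primal a0_simplex; lra.
- exact: dual_minimizer_gradient a0_sub.
Qed.

End Duality.

Theorem mainTheorem7 (n N p : nat) (eps : R) (C : 'I_n -> 'I_n -> R)
  (b : 'I_N -> vec n) (lam : vec N)
  (A : vec n -> vec p) (Astar : vec p -> vec n) (J : vec p -> R) :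
  0 < eps ->
  (forall k, simplex (b k)) ->
  simplex lam -> (forall k, 0 < lam k) ->
  linear_map A -> is_adjoint A Astar ->
  convex_fun J ->
  (exists a0, simplex a0 /\
     (forall a, simplex a -> primal_obj eps C b lam A J a0 <= primal_obj eps C b lam A J a) /\
     dual_inf eps C b lam Astar J = Fin (- primal_obj eps C b lam A J a0))
  /\
  (forall (f : 'I_N -> vec n) (g : vec p),
     dual_minimizer eps C b lam Astar J f g ->
     exists a : vec n,
       (forall k, is_gradient (Fb_star eps C (b k)) (f k) a) /\
       simplex a /\
       (forall a', simplex a' -> primal_obj eps C b lam A J a <= primal_obj eps C b lam A J a')).
Proof.
move=> eps_gt0 b_simplex lam_simplex lam_gt0 _ A_adjoint J_convex.
case: (primal_dual_solution C eps_gt0 b_simplex lam_simplex lam_gt0 A_adjoint J_convex)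
  => a0 [a0_simplex [a0_opt [a0_val a0_grad]]].
split.
- exists a0; split => //; split => //.
  rewrite (dual_infE C eps_gt0 b_simplex lam_simplex lam_gt0 A_adjoint J_convex).
  by rewrite a0_val Ropp_involutive.
- by move=> f g fg_min; exists a0; split => //; apply: a0_grad fg_min.
Qed.
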